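(* Let $\alpha_1,\mu_1\in\mathbb R$, $m\ge2$ an integer, and consider $$\partial_t u+u\,u_{xxx}+\alpha_1u_xu_{xx}+\frac{\mu_1}{m}(u^m)_x=0. \qquad(\ast)$$ Let $I=[a,b]$, $0<\alpha\le1$, and let $f\in L^\infty([0,\delta];\widetilde C^{3,\alpha}(I))$ be a solution of $(\ast)$ whose initial data $f_0$ is positive on $I\setminus\partial I$ and vanishes to order at least $3$ at each point of $\partial I$. Then: (1) for all $t\in[0,\delta]$, $f(t,\cdot)$ vanishes on $\partial I$ and $f(t,x)>0$ for $x\in I\setminus\partial I$; (2) the functions $t\mapsto\partial_x^kf(t,a)$, $k=0,1,2,3$, on $[0,\delta]$ are determined by the initial values $\partial_x^kf(0,a)$, $k=0,\dots,3$ (i.e. any two such solutions with the same values of $\partial_x^kf(0,a)$, $k\le3$, have the same $\partial_x^kf(t,a)$, $k\le 3$, for all $t\in[0,\delta]$). In particular, $$f(t,x)=(\beta(t)(x-a))^3+O\big(\|f\|_{L^\infty([0,\delta];C^{3,\alpha}(I))}|x-a|^{3+\alpha}\big)\quad\text{as }x\to a^+,$$ where the implicit constant in $O(\cdot)$ is universal and $\beta$ solves $\dot\beta(t)=-(2+6\alpha_1)\beta^4(t)$, $6\beta^3(0)=f_{0,xxx}(a)$. The analogous statements hold at the endpoint $b$.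
   Context: For a $C^{2,1}$ function $f$ on an interval $I$, $\|f\|_{Y(I)}=\|f^{-2/3}\partial_xf\|_{L^\infty(I)}^3+\|f^{-1/3}\partial_{xx}f\|_{L^\infty(I)}^{3/2}+\|f\|_{L^\infty(I)}+\|\partial_{xxx}f\|_{L^\infty(I)}$, and $\|f\|_{\widetilde C^{k,\alpha}(I)}=\|f\|_{C^{k,\alpha}(I)}+\|f\|_{Y(I)}$. For time-dependent $f$, $\|f\|_{L^\infty([0,\delta];\widetilde C^{k,\alpha}(I))}=\sup_{t\in[0,\delta]}\|f(t)\|_{\widetilde C^{k,\alpha}(I)}$, and $f$ belongs to this space if this is finite. *)

From Stdlib Require Import Reals.
From Coquelicot Require Import Coquelicot.
Open Scope R_scope.

Definition deriv_on (lo hi : R) (g g' : R -> R) : Prop :=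
  forall x, lo <= x <= hi ->
    filterlim (fun y => (g y - g x) / (y - x))
      (within (fun y => lo <= y <= hi /\ y <> x) (locally x))
      (locally (g' x)).

Definition x_derivs (a b : R) (F0 F1 F2 F3 : R -> R) : Prop :=
  deriv_on a b F0 F1 /\ deriv_on a b F1 F2 /\ deriv_on a b F2 F3.

(* ||F0||_{C^{3,alpha}([a,b])} <= M, where the norm is
   sup|F0| + sup|F0'| + sup|F0''| + sup|F0'''| + [F0''']_alpha. *)
Definition C3a_norm_le (a b alpha : R) (F0 F1 F2 F3 : R -> R) (M : R) : Prop :=
  exists M0 M1 M2 M3 H : R,
    (forall x, a <= x <= b -> Rabs (F0 x) <= M0) /\
    (forall x, a <= x <= b -> Rabs (F1 x) <= M1) /\
    (forall x, a <= x <= b -> Rabs (F2 x) <= M2) /\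
    (forall x, a <= x <= b -> Rabs (F3 x) <= M3) /\
    (forall x y, a <= x <= b -> a <= y <= b -> x <> y ->
       Rabs (F3 x - F3 y) <= H * Rpower (Rabs (x - y)) alpha) /\
    M0 + M1 + M2 + M3 + H <= M.

(* Each term of the Y([a,b]) norm is <= K:
   |F0|^{-2/3}|F0'| and |F0|^{-1/3}|F0''| (sup over the points where
   F0 <> 0, where these expressions are defined), |F0|, |F0'''|. *)
Definition Y_bounded (a b : R) (F0 F1 F2 F3 : R -> R) (K : R) : Prop :=
  forall x, a <= x <= b ->
    (F0 x <> 0 ->
       Rpower (Rabs (F0 x)) (-(2/3)) * Rabs (F1 x) <= K /\
       Rpower (Rabs (F0 x)) (-(1/3)) * Rabs (F2 x) <= K) /\
    Rabs (F0 x) <= K /\ Rabs (F3 x) <= K.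

Definition in_Linf_Ctilde3a (a b delta alpha : R)
    (f f1 f2 f3 : R -> R -> R) : Prop :=
  (forall t, 0 <= t <= delta -> x_derivs a b (f t) (f1 t) (f2 t) (f3 t)) /\
  (exists M, forall t, 0 <= t <= delta ->
       C3a_norm_le a b alpha (f t) (f1 t) (f2 t) (f3 t) M) /\
  (exists K, forall t, 0 <= t <= delta ->
       Y_bounded a b (f t) (f1 t) (f2 t) (f3 t) K).

(* f (with x-derivatives f1,f2,f3 and t-derivative ft) solves
   u_t + u u_xxx + alpha1 u_x u_xx + (mu1/m) (u^m)_x = 0
   on [0,delta] x [a,b];  (u^m)_x = m u^(m-1) u_x. *)
Definition is_solution (alpha1 mu1 : R) (m : nat) (a b delta : R)
    (f f1 f2 f3 ft : R -> R -> R) : Prop :=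
  forall x, a <= x <= b ->
    deriv_on 0 delta (fun t => f t x) (fun t => ft t x) /\
    forall t, 0 <= t <= delta ->
      ft t x + f t x * f3 t x + alpha1 * f1 t x * f2 t x
        + mu1 / INR m * (INR m * f t x ^ (m - 1) * f1 t x) = 0.

Definition Sol (alpha1 mu1 : R) (m : nat) (a b delta alpha : R)
    (f f1 f2 f3 ft : R -> R -> R) : Prop :=
  in_Linf_Ctilde3a a b delta alpha f f1 f2 f3 /\
  is_solution alpha1 mu1 m a b delta f f1 f2 f3 ft /\
  (forall x, a < x < b -> 0 < f 0 x) /\
  f 0 a = 0 /\ f1 0 a = 0 /\ f2 0 a = 0 /\
  f 0 b = 0 /\ f1 0 b = 0 /\ f2 0 b = 0.

From Stdlib Require Import Reals Lra Lia.
From Coquelicot Require Import Coquelicot.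
Open Scope R_scope.

(* Where the solution does not vanish, the Y-norm bounds f_x by |f|^(2/3) and f_xx
   by |f|^(1/3), so |f_t| <= C |f|; Gronwall's lemma in time then propagates the zeros
   at the endpoints and the positivity inside.  At a zero the same bounds force
   f_x = f_xx = 0, so f(t, a + s) = c(t) s^3 + O(s^(3 + alpha)) with
   c = f_xxx(t, a) / 6 >= 0, and similarly for the x-derivatives.  Inserting these
   expansions into the equation gives f_t(t, a + s) = - (6 + 18 alpha1) c^2 s^3
   + O(s^(3 + alpha)); dividing by s^3 and letting s -> 0 yields
   c' = - (6 + 18 alpha1) c^2.  This Riccati equation has unique bounded solutions,
   and beta = c^(1/3) solves beta' = - (2 + 6 alpha1) beta^4.  The reflection
   x -> a + b - x reverses the sign of the nonlinearity, so the endpoint b reduces to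
   the endpoint a for the equation with the opposite sign. *)

(** * Derivatives on a closed interval *)

Definition is_deriv_in (lo hi : R) (g : R -> R) (x l : R) : Prop :=
  forall e, 0 < e -> exists d, 0 < d /\
    forall y, lo <= y <= hi -> Rabs (y - x) < d ->
      Rabs (g y - g x - l * (y - x)) <= e * Rabs (y - x).

Lemma linear_error_of_slope_error u h l e :
  h <> 0 -> Rabs (u / h - l) <= e -> Rabs (u - l * h) <= e * Rabs h.
Proof.
  intros Hh He; replace (u - l * h) with ((u / h - l) * h) by (field; exact Hh).
  rewrite Rabs_mult; apply Rmult_le_compat_r; [apply Rabs_pos | exact He].
Qed.

Lemma slope_error_of_linear_error u h l e e' :
  h <> 0 -> Rabs (u - l * h) <= e * Rabs h -> e < e' -> Rabs (u / h - l) < e'.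
Proof.
  intros Hh He Hee'; assert (Hpos : 0 < Rabs h) by (apply Rabs_pos_lt; exact Hh).
  replace (u / h - l) with ((u - l * h) / h) by (field; exact Hh).
  unfold Rdiv; rewrite Rabs_mult, Rabs_inv.
  apply Rle_lt_trans with (e * Rabs h * / Rabs h).
  - apply Rmult_le_compat_r; [apply Rlt_le, Rinv_0_lt_compat, Hpos | exact He].
  - field_simplify; lra.
Qed.

Lemma deriv_on_is_deriv_in lo hi g g' x :
  deriv_on lo hi g g' -> lo <= x <= hi -> is_deriv_in lo hi g x (g' x).
Proof.
  intros Hg Hx e He.
  destruct (proj1 (filterlim_locally _ _) (Hg x Hx) (mkposreal e He)) as [d Hd].
  exists d; split; [apply cond_pos|]; intros y Hy Hyx.
  destruct (Req_dec y x) as [->|Hne].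
  { rewrite !Rminus_diag, Rmult_0_r, Rminus_diag, !Rabs_R0; lra. }
  apply linear_error_of_slope_error; [lra|]; left; exact (Hd y Hyx (conj Hy Hne)).
Qed.

Lemma is_deriv_in_deriv_on lo hi g g' :
  (forall x, lo <= x <= hi -> is_deriv_in lo hi g x (g' x)) -> deriv_on lo hi g g'.
Proof.
  intros Hg x Hx; apply filterlim_locally; intros [eps Heps].
  destruct (Hg x Hx (eps / 2)) as [d [Hd Hb]]; [lra|].
  exists (mkposreal d Hd); intros y Hyx [Hy Hne].
  apply (slope_error_of_linear_error _ _ _ (eps / 2)); [lra | apply Hb; auto | simpl; lra].
Qed.

Lemma is_deriv_in_restrict lo hi lo' hi' g x l :
  is_deriv_in lo hi g x l -> lo <= lo' -> hi' <= hi -> is_deriv_in lo' hi' g x l.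
Proof.
  intros Hg Hlo Hhi e He; destruct (Hg e He) as [d [Hd Hb]].
  exists d; split; [exact Hd|]; intros y Hy; apply Hb; lra.
Qed.

Lemma deriv_on_restrict lo hi lo' hi' g g' :
  deriv_on lo hi g g' -> lo <= lo' -> hi' <= hi -> deriv_on lo' hi' g g'.
Proof.
  intros Hg Hlo Hhi; apply is_deriv_in_deriv_on; intros x Hx.
  apply (is_deriv_in_restrict lo hi); auto; apply deriv_on_is_deriv_in; auto; lra.
Qed.

Lemma deriv_on_ext lo hi g g' h' :
  deriv_on lo hi g g' -> (forall x, lo <= x <= hi -> g' x = h' x) -> deriv_on lo hi g h'.
Proof. intros Hg E x Hx; rewrite <- E by exact Hx; auto. Qed.

Lemma is_derive_bound g x l : is_derive g x l ->
  forall e, 0 < e -> exists d, 0 < d /\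
    forall y, Rabs (y - x) < d -> Rabs (g y - g x - l * (y - x)) <= e * Rabs (y - x).
Proof.
  intros Hg; apply is_derive_Reals in Hg; intros e He.
  destruct (Hg e He) as [d Hd]; exists d; split; [apply cond_pos|]; intros y Hy.
  destruct (Req_dec y x) as [->|Hne].
  { rewrite !Rminus_diag, Rmult_0_r, Rminus_diag, !Rabs_R0; lra. }
  specialize (Hd (y - x) ltac:(lra) Hy); replace (x + (y - x)) with y in Hd by ring.
  apply linear_error_of_slope_error; [lra | left; exact Hd].
Qed.

Lemma is_derive_is_deriv_in lo hi g x l : is_derive g x l -> is_deriv_in lo hi g x l.
Proof.
  intros Hg e He; destruct (is_derive_bound g x l Hg e He) as [d [Hd Hb]].
  exists d; split; auto.
Qed.

Lemma deriv_on_is_derive lo hi g g' :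
  (forall x, is_derive g x (g' x)) -> deriv_on lo hi g g'.
Proof. intros Hg; apply is_deriv_in_deriv_on; intros x _; apply is_derive_is_deriv_in, Hg. Qed.

Lemma is_deriv_in_is_derive lo hi g x l :
  is_deriv_in lo hi g x l -> lo < x < hi -> is_derive g x l.
Proof.
  intros Hg Hx; apply is_derive_Reals; intros eps Heps.
  destruct (Hg (eps / 2)) as [d [Hd Hb]]; [lra|].
  set (r := Rmin d (Rmin (x - lo) (hi - x))).
  assert (Hr : 0 < r) by (repeat apply Rmin_pos; lra).
  pose proof (Rmin_l d (Rmin (x - lo) (hi - x))); pose proof (Rmin_r d (Rmin (x - lo) (hi - x)));
  pose proof (Rmin_l (x - lo) (hi - x)); pose proof (Rmin_r (x - lo) (hi - x)).
  exists (mkposreal r Hr); simpl; intros h Hh0 Hh.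
  assert (Hy : lo <= x + h <= hi) by (revert Hh; unfold r, Rabs; destruct Rcase_abs; lra).
  specialize (Hb (x + h) Hy); replace (x + h - x) with h in Hb by ring.
  apply (slope_error_of_linear_error _ _ _ (eps / 2));
    [exact Hh0 | apply Hb; unfold r in *; lra | lra].
Qed.

Lemma is_deriv_in_lipschitz lo hi g x l :
  is_deriv_in lo hi g x l -> exists d, 0 < d /\ forall y, lo <= y <= hi -> Rabs (y - x) < d ->
    Rabs (g y - g x) <= (Rabs l + 1) * Rabs (y - x).
Proof.
  intros Hg; destruct (Hg 1 Rlt_0_1) as [d [Hd Hb]]; exists d; split; [exact Hd|].
  intros y Hy Hyx; specialize (Hb y Hy Hyx).
  replace (g y - g x) with ((g y - g x - l * (y - x)) + l * (y - x)) by ring.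
  eapply Rle_trans; [apply Rabs_triang|]; rewrite Rabs_mult; lra.
Qed.

Lemma is_deriv_in_continuous lo hi g x l :
  is_deriv_in lo hi g x l -> forall e, 0 < e -> exists d, 0 < d /\
    forall y, lo <= y <= hi -> Rabs (y - x) < d -> Rabs (g y - g x) < e.
Proof.
  intros Hg e He; destruct (is_deriv_in_lipschitz lo hi g x l Hg) as [d [Hd Hb]].
  pose proof (Rabs_pos l) as Hl.
  exists (Rmin d (e / (Rabs l + 1))); split.
  { apply Rmin_pos; [lra | apply Rdiv_lt_0_compat; lra]. }
  intros y Hy Hyx.
  pose proof (Rmin_l d (e / (Rabs l + 1))); pose proof (Rmin_r d (e / (Rabs l + 1))).
  eapply Rle_lt_trans; [apply Hb; auto; lra|].
  apply Rlt_le_trans with ((Rabs l + 1) * (e / (Rabs l + 1))); [|right; field; lra].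
  apply Rmult_lt_compat_l; lra.
Qed.

Lemma is_deriv_in_minus lo hi g h x lg lh :
  is_deriv_in lo hi g x lg -> is_deriv_in lo hi h x lh ->
  is_deriv_in lo hi (fun y => g y - h y) x (lg - lh).
Proof.
  intros Hg Hh e He.
  destruct (Hg (e / 2)) as [d1 [Hd1 H1]]; [lra|]; destruct (Hh (e / 2)) as [d2 [Hd2 H2]]; [lra|].
  exists (Rmin d1 d2); split; [apply Rmin_pos; lra|]; intros y Hy Hyx.
  pose proof (Rmin_l d1 d2); pose proof (Rmin_r d1 d2).
  specialize (H1 y Hy ltac:(lra)); specialize (H2 y Hy ltac:(lra)).
  replace (g y - h y - (g x - h x) - (lg - lh) * (y - x))
    with ((g y - g x - lg * (y - x)) - (h y - h x - lh * (y - x))) by ring.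
  eapply Rle_trans; [apply Rabs_triang|]; rewrite Rabs_Ropp; lra.
Qed.

Lemma deriv_on_minus lo hi g g' h h' :
  deriv_on lo hi g g' -> deriv_on lo hi h h' ->
  deriv_on lo hi (fun y => g y - h y) (fun y => g' y - h' y).
Proof.
  intros Hg Hh; apply is_deriv_in_deriv_on; intros x Hx.
  apply is_deriv_in_minus; apply deriv_on_is_deriv_in; auto.
Qed.

Lemma is_deriv_in_mult lo hi g h x lg lh :
  is_deriv_in lo hi g x lg -> is_deriv_in lo hi h x lh ->
  is_deriv_in lo hi (fun y => g y * h y) x (lg * h x + g x * lh).
Proof.
  intros Hg Hh e He.
  set (S := Rabs (h x) + Rabs (g x) + Rabs lg + 1).
  assert (HS : 1 <= S) by (unfold S; pose proof (Rabs_pos (h x)); pose proof (Rabs_pos (g x));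
    pose proof (Rabs_pos lg); lra).
  set (e1 := Rmin 1 (e / S)).
  assert (He1 : 0 < e1) by (apply Rmin_pos; [lra | apply Rdiv_lt_0_compat; lra]).
  assert (He1S : e1 * S <= e).
  { apply Rle_trans with (e / S * S); [apply Rmult_le_compat_r; [lra | apply Rmin_r]|].
    right; field; lra. }
  pose proof (Rmin_l 1 (e / S) : e1 <= 1).
  destruct (Hg e1 He1) as [d1 [Hd1 H1]]; destruct (Hh e1 He1) as [d2 [Hd2 H2]].
  destruct (is_deriv_in_continuous lo hi h x lh Hh e1 He1) as [d3 [Hd3 H3]].
  exists (Rmin d1 (Rmin d2 d3)); split; [repeat apply Rmin_pos; lra|]; intros y Hy Hyx.
  pose proof (Rmin_l d1 (Rmin d2 d3)); pose proof (Rmin_r d1 (Rmin d2 d3));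
  pose proof (Rmin_l d2 d3); pose proof (Rmin_r d2 d3).
  specialize (H1 y Hy ltac:(lra)); specialize (H2 y Hy ltac:(lra)); specialize (H3 y Hy ltac:(lra)).
  assert (Hgy : Rabs (g y - g x) <= (e1 + Rabs lg) * Rabs (y - x)).
  { replace (g y - g x) with ((g y - g x - lg * (y - x)) + lg * (y - x)) by ring.
    eapply Rle_trans; [apply Rabs_triang|]; rewrite Rabs_mult; lra. }
  replace (g y * h y - g x * h x - (lg * h x + g x * lh) * (y - x)) with
    ((g y - g x - lg * (y - x)) * h x + g x * (h y - h x - lh * (y - x))
     + (g y - g x) * (h y - h x)) by ring.
  pose proof (Rabs_pos (y - x)); pose proof (Rabs_pos (g y - g x));
  pose proof (Rabs_pos (h x)); pose proof (Rabs_pos (g x)); pose proof (Rabs_pos lg).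
  eapply Rle_trans; [apply Rabs_triang|].
  eapply Rle_trans; [apply Rplus_le_compat_r, Rabs_triang|]; rewrite !Rabs_mult.
  assert (T1 := Rmult_le_compat_r _ _ _ (Rabs_pos (h x)) H1).
  assert (T2 := Rmult_le_compat_l _ _ _ (Rabs_pos (g x)) H2).
  assert (T3 : Rabs (g y - g x) * Rabs (h y - h x) <= (1 + Rabs lg) * Rabs (y - x) * e1).
  { apply Rmult_le_compat; try apply Rabs_pos; [|lra].
    apply Rle_trans with (1 := Hgy); apply Rmult_le_compat_r; lra. }
  apply Rle_trans with (e1 * S * Rabs (y - x)); [|apply Rmult_le_compat_r; lra].
  unfold S; lra.
Qed.

Lemma is_deriv_in_comp lo hi phi c x l D :
  is_deriv_in lo hi c x l -> is_derive phi (c x) D ->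
  is_deriv_in lo hi (fun y => phi (c y)) x (D * l).
Proof.
  intros Hc Hphi e He.
  pose proof (Rabs_pos l) as Hl; pose proof (Rabs_pos D) as HD.
  set (e1 := e / (2 * (Rabs l + 1))); set (e2 := e / (2 * (Rabs D + 1))).
  assert (He1 : 0 < e1) by (apply Rdiv_lt_0_compat; lra).
  assert (He2 : 0 < e2) by (apply Rdiv_lt_0_compat; lra).
  destruct (is_derive_bound phi (c x) D Hphi e1 He1) as [d1 [Hd1 H1]].
  destruct (is_deriv_in_continuous lo hi c x l Hc d1 Hd1) as [d2 [Hd2 H2]].
  destruct (is_deriv_in_lipschitz lo hi c x l Hc) as [d3 [Hd3 H3]].
  destruct (Hc e2 He2) as [d4 [Hd4 H4]].
  exists (Rmin (Rmin d2 d3) d4); split; [repeat apply Rmin_pos; lra|]; intros y Hy Hyx.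
  pose proof (Rmin_l (Rmin d2 d3) d4); pose proof (Rmin_r (Rmin d2 d3) d4);
  pose proof (Rmin_l d2 d3); pose proof (Rmin_r d2 d3).
  specialize (H1 (c y) (H2 y Hy ltac:(lra))); specialize (H3 y Hy ltac:(lra));
  specialize (H4 y Hy ltac:(lra)).
  replace (phi (c y) - phi (c x) - D * l * (y - x)) with
    ((phi (c y) - phi (c x) - D * (c y - c x)) + D * (c y - c x - l * (y - x))) by ring.
  eapply Rle_trans; [apply Rabs_triang|]; rewrite Rabs_mult.
  assert (T1 : e1 * Rabs (c y - c x) <= e / 2 * Rabs (y - x)).
  { apply Rle_trans with (e1 * ((Rabs l + 1) * Rabs (y - x))).
    - apply Rmult_le_compat_l; lra.
    - right; unfold e1; field; lra. }
  assert (T2 : Rabs D * Rabs (c y - c x - l * (y - x)) <= e / 2 * Rabs (y - x)).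
  { apply Rle_trans with (Rabs D * (e2 * Rabs (y - x))); [apply Rmult_le_compat_l; lra|].
    rewrite <- Rmult_assoc; apply Rmult_le_compat_r; [apply Rabs_pos|].
    apply Rle_trans with ((Rabs D + 1) * e2); [apply Rmult_le_compat_r; lra|].
    right; unfold e2; field; lra. }
  lra.
Qed.

Lemma deriv_on_opp lo hi g g' :
  deriv_on lo hi g g' -> deriv_on lo hi (fun y => - g y) (fun y => - g' y).
Proof.
  intros Hg; apply is_deriv_in_deriv_on; intros x Hx e He.
  destruct (deriv_on_is_deriv_in lo hi g g' x Hg Hx e He) as [d [Hd Hb]].
  exists d; split; [exact Hd|]; intros y Hy Hyx.
  replace (- g y - - g x - - g' x * (y - x)) with (- (g y - g x - g' x * (y - x))) by ring.
  rewrite Rabs_Ropp; auto.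
Qed.

Lemma deriv_on_reflect lo hi g g' : deriv_on lo hi g g' ->
  deriv_on lo hi (fun y => g (lo + hi - y)) (fun y => - g' (lo + hi - y)).
Proof.
  intros Hg; apply is_deriv_in_deriv_on; intros x Hx e He.
  destruct (deriv_on_is_deriv_in lo hi g g' (lo + hi - x) Hg ltac:(lra) e He) as [d [Hd Hb]].
  exists d; split; [exact Hd|]; intros y Hy Hyx.
  assert (E : lo + hi - y - (lo + hi - x) = - (y - x)) by ring.
  specialize (Hb (lo + hi - y) ltac:(lra)); rewrite E, Rabs_Ropp in Hb.
  replace (- g' (lo + hi - x) * (y - x)) with (g' (lo + hi - x) * - (y - x)) by ring.
  auto.
Qed.

Definition clamp (lo hi t : R) : R := Rmax lo (Rmin hi t).

Lemma clamp_in lo hi t : lo <= hi -> lo <= clamp lo hi t <= hi.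
Proof. intros; unfold clamp, Rmax, Rmin; repeat destruct Rle_dec; lra. Qed.

Lemma clamp_id lo hi t : lo <= t <= hi -> clamp lo hi t = t.
Proof. intros; unfold clamp, Rmax, Rmin; repeat destruct Rle_dec; lra. Qed.

Lemma clamp_lipschitz lo hi t u : lo <= hi ->
  Rabs (clamp lo hi t - clamp lo hi u) <= Rabs (t - u).
Proof.
  intros; unfold clamp, Rmax, Rmin; repeat destruct Rle_dec; unfold Rabs;
    repeat destruct Rcase_abs; lra.
Qed.

Lemma deriv_on_continuous_clamp lo hi g g' :
  lo <= hi -> deriv_on lo hi g g' -> continuity (fun t => g (clamp lo hi t)).
Proof.
  intros Hlh Hg x eps Heps.
  destruct (is_deriv_in_continuous lo hi g (clamp lo hi x) (g' (clamp lo hi x))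
    (deriv_on_is_deriv_in lo hi g g' _ Hg (clamp_in lo hi x Hlh)) eps Heps) as [d [Hd Hb]].
  exists d; split; [exact Hd|]; intros y [_ Hy]; simpl; unfold R_dist in *.
  apply Hb; [apply clamp_in, Hlh|].
  eapply Rle_lt_trans; [apply clamp_lipschitz, Hlh | exact Hy].
Qed.

(* Coquelicot's [MVT_gen] needs two-sided continuity at the endpoints, which is
   why [g] is extended by constants outside [[u, v]]. *)
Lemma deriv_on_mvt lo hi g g' u v :
  deriv_on lo hi g g' -> lo <= u -> u < v -> v <= hi ->
  exists xi, u <= xi <= v /\ g v - g u = g' xi * (v - u).
Proof.
  intros Hg Hu Huv Hv.
  assert (Hg' := deriv_on_restrict lo hi u v g g' Hg Hu Hv).
  destruct (MVT_gen (fun t => g (clamp u v t)) u v g') as [xi [Hxi E]].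
  - intros x Hx; rewrite Rmin_left, Rmax_right in Hx by lra.
    apply is_derive_ext_loc with g.
    + assert (Hr : 0 < Rmin (x - u) (v - x)) by (apply Rmin_pos; lra).
      exists (mkposreal _ Hr); intros y Hy; change (Rabs (y - x) < Rmin (x - u) (v - x)) in Hy.
      pose proof (Rmin_l (x - u) (v - x)); pose proof (Rmin_r (x - u) (v - x)).
      rewrite clamp_id; auto; revert Hy; unfold Rabs; destruct Rcase_abs; lra.
    + apply (is_deriv_in_is_derive u v); [apply deriv_on_is_deriv_in|]; auto; lra.
  - intros x _; apply (deriv_on_continuous_clamp u v g g'); [lra | exact Hg'].
  - rewrite Rmin_left, Rmax_right in Hxi by lra; rewrite !clamp_id in E by lra.
    exists xi; auto.
Qed.

Lemma deriv_on_mvi lo hi g g' u v E :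
  deriv_on lo hi g g' -> lo <= u <= v -> v <= hi ->
  (forall w, u <= w <= v -> Rabs (g' w) <= E) -> Rabs (g v - g u) <= E * (v - u).
Proof.
  intros Hg Hu Hv HE; destruct (Req_dec u v) as [<-|Hne].
  { rewrite !Rminus_diag, Rabs_R0; lra. }
  destruct (deriv_on_mvt lo hi g g' u v Hg) as [xi [Hxi ->]]; try lra.
  rewrite Rabs_mult, (Rabs_right (v - u)) by lra.
  apply Rmult_le_compat_r; [lra | apply HE; lra].
Qed.

Lemma deriv_on_mvi_abs lo hi g g' u v E :
  deriv_on lo hi g g' -> lo <= u <= hi -> lo <= v <= hi ->
  (forall w, lo <= w <= hi -> Rabs (w - u) <= Rabs (v - u) -> Rabs (g' w) <= E) ->
  Rabs (g v - g u) <= E * Rabs (v - u).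
Proof.
  intros Hg Hu Hv HE; destruct (Rle_dec u v) as [Huv|Hvu].
  - rewrite (Rabs_right (v - u)) by lra; apply (deriv_on_mvi lo hi g g'); [exact Hg|lra|lra|].
    intros w Hw; apply HE; [lra|]; rewrite !Rabs_right; lra.
  - rewrite Rabs_minus_sym, (Rabs_minus_sym v), (Rabs_right (u - v)) by lra.
    apply (deriv_on_mvi lo hi g g'); [exact Hg|lra|lra|].
    intros w Hw; apply HE; [lra|]; rewrite Rabs_minus_sym, (Rabs_minus_sym v), !Rabs_right; lra.
Qed.

(** * Gronwall's lemma *)

Lemma mul_le_of_abs_le L G G' :
  (G <> 0 -> Rabs G' <= L * Rabs G) -> G * G' <= L * G ^ 2.
Proof.
  intros H; destruct (Req_dec G 0) as [->|Hne]; [simpl; lra|].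
  specialize (H Hne); pose proof (Rabs_pos G).
  apply Rle_trans with (Rabs (G * G')); [apply Rle_abs|].
  rewrite Rabs_mult, <- (pow2_abs G); simpl; nra.
Qed.

(* [u |-> g u ^ 2 * exp (- 2 L u)] is nonincreasing; the square makes the
   zeros of [g], where no bound on [g'] is assumed, harmless. *)
Lemma gronwall_forward lo hi g g' L t0 t :
  deriv_on lo hi g g' ->
  (forall u, lo <= u <= hi -> g u <> 0 -> Rabs (g' u) <= L * Rabs (g u)) ->
  lo <= t0 <= t -> t <= hi -> g t0 = 0 -> g t = 0.
Proof.
  intros Hg HL Ht0 Ht Hz; destruct (Req_dec t0 t) as [<-|Hne]; [exact Hz|].
  set (w u := exp (- (2 * L) * u)).
  assert (Hw : forall u, is_derive w u (- (2 * L) * w u)).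
  { intros u; unfold w; auto_derive; auto; ring. }
  assert (Hh : deriv_on lo hi (fun u => g u * g u * w u)
     (fun u => (g' u * g u + g u * g' u) * w u + g u * g u * (- (2 * L) * w u))).
  { apply is_deriv_in_deriv_on; intros u Hu.
    apply (is_deriv_in_mult lo hi (fun u => g u * g u) w u).
    - apply is_deriv_in_mult; apply (deriv_on_is_deriv_in lo hi g g'); auto.
    - apply is_derive_is_deriv_in, Hw. }
  destruct (deriv_on_mvt lo hi _ _ t0 t Hh) as [xi [Hxi E]]; try lra.
  rewrite Hz in E.
  assert (Hd := mul_le_of_abs_le L (g xi) (g' xi) (HL xi ltac:(lra))).
  assert (Hwxi : 0 < w xi) by apply exp_pos; assert (Hwt : 0 < w t) by apply exp_pos.
  assert (Hneg : ((g' xi * g xi + g xi * g' xi) * w xi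
                  + g xi * g xi * (- (2 * L) * w xi)) * (t - t0) <= 0).
  { apply Rmult_le_0_r; [|lra].
    replace ((g' xi * g xi + g xi * g' xi) * w xi + g xi * g xi * (- (2 * L) * w xi))
      with (2 * (g xi * g' xi - L * g xi ^ 2) * w xi) by ring.
    apply Rmult_le_0_r; lra. }
  assert (Hsq : g t * g t * w t <= 0) by lra.
  apply Rsqr_0_uniq; unfold Rsqr; nra.
Qed.

Lemma gronwall lo hi g g' L t0 t :
  deriv_on lo hi g g' ->
  (forall u, lo <= u <= hi -> g u <> 0 -> Rabs (g' u) <= L * Rabs (g u)) ->
  lo <= t0 <= hi -> lo <= t <= hi -> g t0 = 0 -> g t = 0.
Proof.
  intros Hg HL Ht0 Ht Hz; destruct (Rle_dec t0 t).
  - apply (gronwall_forward lo hi g g' L t0); auto; lra.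
  - replace t with (lo + hi - (lo + hi - t)) by ring.
    apply (gronwall_forward lo hi _ _ L (lo + hi - t0) _ (deriv_on_reflect lo hi g g' Hg)).
    + intros u Hu Hne; rewrite Rabs_Ropp; apply HL; auto; lra.
    + lra.
    + lra.
    + replace (lo + hi - (lo + hi - t0)) with t0 by ring; exact Hz.
Qed.

(** * Real powers *)

Lemma pow_Rpower_le_compat k alpha y z :
  0 <= alpha -> 0 < y <= z -> y ^ k * Rpower y alpha <= z ^ k * Rpower z alpha.
Proof.
  intros Halpha Hyz; apply Rmult_le_compat.
  - apply pow_le; lra.
  - left; apply exp_pos.
  - apply pow_incr; lra.
  - apply Rle_Rpower_l; lra.
Qed.

Lemma Rpower_small_bounds s alpha :
  0 < s <= 1 -> 0 < alpha <= 1 -> s <= Rpower s alpha <= 1.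
Proof.
  intros Hs Halpha; unfold Rpower.
  assert (Hl : ln s <= 0) by (rewrite <- ln_1; apply ln_le; lra).
  assert (exp_le : forall x y, x <= y -> exp x <= exp y)
    by (intros x y [Hxy | <-]; [left; apply exp_increasing, Hxy | right; reflexivity]).
  split.
  - rewrite <- (exp_ln s) at 1 by lra; apply exp_le; nra.
  - rewrite <- exp_0; apply exp_le; nra.
Qed.

Lemma Rpower_3_plus s alpha : 0 < s -> Rpower s (3 + alpha) = s ^ 3 * Rpower s alpha.
Proof.
  intros Hs; rewrite Rpower_plus; f_equal.
  replace 3 with (INR 3) by (simpl; ring); apply Rpower_pow, Hs.
Qed.

Lemma Rpower_lower_bound q K z Q D :
  0 < q -> 0 < z -> 0 < D -> 0 < K ->
  Rpower z (- q) * Q <= K -> D <= Q -> Rpower (D / K) (/ q) <= z.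
Proof.
  intros Hq Hz HD HK H1 H2; rewrite Rpower_Ropp in H1.
  assert (HP : 0 < Rpower z q) by apply exp_pos.
  assert (H3 : D / K <= Rpower z q).
  { apply Rmult_le_reg_r with K; [exact HK|].
    apply Rmult_le_compat_l with (r := Rpower z q) in H1; [|lra].
    rewrite <- Rmult_assoc, Rinv_r in H1 by lra.
    unfold Rdiv; rewrite Rmult_assoc, Rinv_l by lra; lra. }
  assert (Ez : z = Rpower (Rpower z q) (/ q))
    by (rewrite Rpower_mult, Rinv_r, Rpower_1; lra).
  rewrite Ez at 1.
  apply Rle_Rpower_l; [left; apply Rinv_0_lt_compat; exact Hq|].
  split; [apply Rdiv_lt_0_compat|]; auto.
Qed.

Lemma le_of_le_add_Rpower alpha s0 X Y Z :
  0 < alpha -> 0 < s0 -> 0 <= Z ->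
  (forall s, 0 < s <= s0 -> X <= Y + Rpower s alpha * Z) -> X <= Y.
Proof.
  intros Halpha Hs0 HZ H; destruct (Rle_dec X Y) as [|Hlt]; [assumption|]; exfalso.
  set (eps := (X - Y) / (2 * (Z + 1))).
  assert (Heps : 0 < eps) by (apply Rdiv_lt_0_compat; lra).
  set (s := Rmin s0 (Rpower eps (/ alpha))).
  assert (Hr : 0 < Rpower eps (/ alpha)) by apply exp_pos.
  assert (Hs : 0 < s <= s0) by (split; [apply Rmin_pos | apply Rmin_l]; lra).
  assert (HP : Rpower s alpha <= eps).
  { assert (E : Rpower (Rpower eps (/ alpha)) alpha = eps)
      by (rewrite Rpower_mult, Rinv_l, Rpower_1; lra).
    rewrite <- E; apply Rle_Rpower_l; [lra|]; split; [lra | apply Rmin_r]. }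
  specialize (H s Hs).
  assert (Rpower s alpha * Z <= eps * Z) by (apply Rmult_le_compat_r; lra).
  assert (eps * Z < X - Y).
  { apply Rmult_lt_reg_r with (2 * (Z + 1)); [lra|]; unfold eps; field_simplify; nra. }
  lra.
Qed.

(** * Taylor expansion with Hölder remainder *)

Lemma deviation_from_poly lo hi F F' p p' x W :
  deriv_on lo hi F F' -> (forall y, is_derive p y (p' y)) ->
  lo <= x <= hi -> F lo = p lo -> F' lo = p' lo -> 0 <= W ->
  (forall y, lo < y <= x -> Rabs (F' y - p' y) <= W) ->
  Rabs (F x - p x) <= W * (x - lo).
Proof.
  intros HF Hp Hx E0 E1 HW HB.
  assert (HD : deriv_on lo hi (fun y => F y - p y) (fun y => F' y - p' y)).
  { apply deriv_on_minus; [|apply deriv_on_is_derive]; auto. }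
  replace (F x - p x) with ((F x - p x) - (F lo - p lo)) by (rewrite E0; ring).
  apply (deriv_on_mvi lo hi _ _ lo x W HD); try lra.
  intros y Hy; destruct (Req_dec y lo) as [->|Hne].
  - rewrite E1, Rminus_diag, Rabs_R0; exact HW.
  - apply HB; lra.
Qed.

Section HolderTaylor.

Variables (a b alpha H : R) (F0 F1 F2 F3 : R -> R).
Hypotheses (Halpha : 0 < alpha) (HH : 0 <= H)
  (D0 : deriv_on a b F0 F1) (D1 : deriv_on a b F1 F2) (D2 : deriv_on a b F2 F3)
  (Z0 : F0 a = 0) (Z1 : F1 a = 0) (Z2 : F2 a = 0)
  (Hol : forall x y, a <= x <= b -> a <= y <= b -> x <> y ->
     Rabs (F3 x - F3 y) <= H * Rpower (Rabs (x - y)) alpha).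

Lemma holder_taylor3 x : a < x <= b -> Rabs (F3 x - F3 a) <= H * Rpower (x - a) alpha.
Proof.
  intros Hx; rewrite <- (Rabs_right (x - a)) by lra; apply Hol; lra.
Qed.

Lemma holder_taylor2 x : a < x <= b ->
  Rabs (F2 x - F3 a * (x - a)) <= H * (x - a) * Rpower (x - a) alpha.
Proof.
  intros Hx.
  rewrite Rmult_assoc, (Rmult_comm (x - a)), <- Rmult_assoc.
  apply (deviation_from_poly a b F2 F3 (fun y => F3 a * (y - a)) (fun _ => F3 a)); auto.
  - intros y; auto_derive; auto; ring.
  - lra.
  - rewrite Z2; ring.
  - apply Rmult_le_pos; [exact HH | left; apply exp_pos].
  - intros y Hy; eapply Rle_trans; [apply holder_taylor3; lra|].
    apply Rmult_le_compat_l; [exact HH|]; apply Rle_Rpower_l; lra.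
Qed.

Lemma holder_taylor1 x : a < x <= b ->
  Rabs (F1 x - F3 a / 2 * (x - a) ^ 2) <= H * (x - a) ^ 2 * Rpower (x - a) alpha.
Proof.
  intros Hx.
  replace (H * (x - a) ^ 2 * Rpower (x - a) alpha)
    with (H * ((x - a) ^ 1 * Rpower (x - a) alpha) * (x - a)) by ring.
  apply (deviation_from_poly a b F1 F2 (fun y => F3 a / 2 * (y - a) ^ 2)
           (fun y => F3 a * (y - a))); auto.
  - intros y; auto_derive; auto; field.
  - lra.
  - rewrite Z1; ring.
  - rewrite Z2; ring.
  - apply Rmult_le_pos; [exact HH|]; apply Rmult_le_pos; [lra | left; apply exp_pos].
  - intros y Hy; eapply Rle_trans; [apply holder_taylor2; lra|].
    rewrite Rmult_assoc; apply Rmult_le_compat_l; [exact HH|].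
    rewrite <- (pow_1 (y - a)) at 1; apply pow_Rpower_le_compat; lra.
Qed.

Lemma holder_taylor0 x : a < x <= b ->
  Rabs (F0 x - F3 a / 6 * (x - a) ^ 3) <= H * (x - a) ^ 3 * Rpower (x - a) alpha.
Proof.
  intros Hx.
  replace (H * (x - a) ^ 3 * Rpower (x - a) alpha)
    with (H * ((x - a) ^ 2 * Rpower (x - a) alpha) * (x - a)) by ring.
  apply (deviation_from_poly a b F0 F1 (fun y => F3 a / 6 * (y - a) ^ 3)
           (fun y => F3 a / 2 * (y - a) ^ 2)); auto.
  - intros y; auto_derive; auto; field.
  - lra.
  - rewrite Z0; ring.
  - rewrite Z1; ring.
  - apply Rmult_le_pos; [exact HH|]; apply Rmult_le_pos; [apply pow_le; lra | left; apply exp_pos].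
  - intros y Hy; eapply Rle_trans; [apply holder_taylor1; lra|].
    rewrite Rmult_assoc; apply Rmult_le_compat_l; [exact HH|].
    apply pow_Rpower_le_compat; lra.
Qed.

End HolderTaylor.

(** * Zeros of a function with bounded Y-norm *)

(* Near a zero of [F0], [|F0| ^ q] is small, so a bound on [|F0| ^ (- q) * |Q|]
   forces [Q] to be small wherever [F0 <> 0]. *)
Lemma weighted_bound_zero a b F0 F0' Q Q' q K :
  0 < q -> deriv_on a b F0 F0' -> deriv_on a b Q Q' -> a <= b -> F0 a = 0 ->
  (forall r, 0 < r -> exists y, a < y < a + r /\ y <= b /\ F0 y <> 0) ->
  (forall y, a <= y <= b -> F0 y <> 0 -> Rpower (Rabs (F0 y)) (- q) * Rabs (Q y) <= K) ->
  Q a = 0.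
Proof.
  intros Hq HF0 HQ Hab Z Hnear HK; destruct (Req_dec (Q a) 0) as [|HQa]; [assumption|].
  exfalso.
  set (D := Rabs (Q a) / 2); assert (HD : 0 < D) by (apply Rdiv_lt_0_compat;
    [apply Rabs_pos_lt |]; lra).
  set (K' := Rmax K 1); assert (HK' : 0 < K') by (pose proof (Rmax_r K 1); unfold K'; lra).
  set (z0 := Rpower (D / K') (/ q)); assert (Hz0 : 0 < z0) by apply exp_pos.
  destruct (is_deriv_in_continuous a b Q a (Q' a)
    (deriv_on_is_deriv_in a b Q Q' a HQ ltac:(lra)) D HD) as [d1 [Hd1 H1]].
  destruct (is_deriv_in_continuous a b F0 a (F0' a)
    (deriv_on_is_deriv_in a b F0 F0' a HF0 ltac:(lra)) z0 Hz0) as [d2 [Hd2 H2]].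
  destruct (Hnear (Rmin d1 d2) (Rmin_pos _ _ Hd1 Hd2)) as [y [Hy [Hyb Hne]]].
  pose proof (Rmin_l d1 d2); pose proof (Rmin_r d1 d2).
  assert (Hya : Rabs (y - a) < Rmin d1 d2) by (rewrite Rabs_right; lra).
  specialize (H1 y ltac:(lra) ltac:(lra)); specialize (H2 y ltac:(lra) ltac:(lra)).
  rewrite Z, Rminus_0_r in H2.
  assert (HQy : D <= Rabs (Q y)).
  { pose proof (Rabs_triang_inv (Q a) (Q a - Q y)) as T.
    replace (Q a - (Q a - Q y)) with (Q y) in T by ring.
    rewrite Rabs_minus_sym in H1; unfold D in *; lra. }
  assert (Hz : z0 <= Rabs (F0 y)).
  { apply (Rpower_lower_bound q K' _ (Rabs (Q y))); auto.
    - apply Rabs_pos_lt, Hne.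
    - apply Rle_trans with K; [apply HK; auto; lra | apply Rmax_l]. }
  lra.
Qed.

Lemma nonzero_near_simple_zero a b F0 F1 :
  a < b -> deriv_on a b F0 F1 -> F0 a = 0 -> F1 a <> 0 ->
  forall r, 0 < r -> exists y, a < y < a + r /\ y <= b /\ F0 y <> 0.
Proof.
  intros Hab HF Z Hne r Hr.
  assert (He : 0 < Rabs (F1 a) / 2) by (apply Rdiv_lt_0_compat; [apply Rabs_pos_lt|]; lra).
  destruct (deriv_on_is_deriv_in a b F0 F1 a HF ltac:(lra) _ He) as [d [Hd Hb]].
  set (y := a + Rmin r (Rmin d (b - a)) / 2).
  assert (Hm : 0 < Rmin r (Rmin d (b - a))) by (repeat apply Rmin_pos; lra).
  pose proof (Rmin_l r (Rmin d (b - a))); pose proof (Rmin_r r (Rmin d (b - a)));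
  pose proof (Rmin_l d (b - a)); pose proof (Rmin_r d (b - a)).
  exists y; unfold y; split; [lra|]; split; [lra|]; fold y; intros Hy0.
  specialize (Hb y ltac:(unfold y; lra) ltac:(rewrite Rabs_right; unfold y; lra)).
  rewrite Hy0, Z, (Rabs_right (y - a)) in Hb by (unfold y; lra).
  replace (0 - 0 - F1 a * (y - a)) with (- (F1 a * (y - a))) in Hb by ring.
  rewrite Rabs_Ropp, Rabs_mult, (Rabs_right (y - a)) in Hb by (unfold y; lra).
  assert (0 < Rabs (F1 a) * (y - a)) by (apply Rmult_lt_0_compat; unfold y; lra).
  lra.
Qed.

Lemma nonzero_near_double_zero a b F0 F1 F2 F3 :
  a < b -> deriv_on a b F0 F1 -> deriv_on a b F1 F2 -> deriv_on a b F2 F3 ->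
  F0 a = 0 -> F1 a = 0 -> F2 a <> 0 ->
  forall r, 0 < r -> exists y, a < y < a + r /\ y <= b /\ F0 y <> 0.
Proof.
  intros Hab HF0 HF1 HF2 Z0 Z1 Hne r Hr.
  set (e := Rabs (F2 a) / 4).
  assert (He : 0 < e) by (apply Rdiv_lt_0_compat; [apply Rabs_pos_lt|]; lra).
  destruct (is_deriv_in_continuous a b F2 a _
    (deriv_on_is_deriv_in a b F2 F3 a HF2 ltac:(lra)) e He) as [d [Hd Hb]].
  set (y := a + Rmin r (Rmin d (b - a)) / 2).
  assert (Hm : 0 < Rmin r (Rmin d (b - a))) by (repeat apply Rmin_pos; lra).
  pose proof (Rmin_l r (Rmin d (b - a))); pose proof (Rmin_r r (Rmin d (b - a)));
  pose proof (Rmin_l d (b - a)); pose proof (Rmin_r d (b - a)).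
  assert (Hy : a < y <= b /\ y - a < d) by (unfold y; lra).
  assert (B1 : forall x, a < x <= y -> Rabs (F1 x - F2 a * (x - a)) <= e * (x - a)).
  { intros x Hx.
    apply (deviation_from_poly a b F1 F2 (fun z => F2 a * (z - a)) (fun _ => F2 a));
      auto; try lra.
    - intros z; auto_derive; auto; ring.
    - intros z Hz; left; apply Hb; [lra | rewrite Rabs_right; lra]. }
  assert (B0 : Rabs (F0 y - F2 a / 2 * (y - a) ^ 2) <= e * (y - a) * (y - a)).
  { apply (deviation_from_poly a b F0 F1 (fun z => F2 a / 2 * (z - a) ^ 2)
      (fun z => F2 a * (z - a))); auto; try lra.
    - intros z; auto_derive; auto; field.
    - apply Rmult_le_pos; lra.
    - intros z Hz; eapply Rle_trans; [apply B1; lra|]; apply Rmult_le_compat_l; lra. }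
  exists y; split; [unfold y; lra|]; split; [lra|]; intros Hy0.
  rewrite Hy0, Rminus_0_l, Rabs_Ropp, Rabs_mult, Rabs_div, (Rabs_right 2),
    (Rabs_right ((y - a) ^ 2)) in B0 by (try apply Rle_ge, pow_le; lra).
  assert (0 < (y - a) ^ 2) by (apply pow_lt; lra).
  assert (0 < Rabs (F2 a)) by (apply Rabs_pos_lt; exact Hne).
  unfold e in B0; simpl in *; nra.
Qed.

Section WeightedBoundsAtZero.

Variables (a b K : R) (F0 F1 F2 F3 : R -> R).
Hypotheses (Hab : a < b)
  (D0 : deriv_on a b F0 F1) (D1 : deriv_on a b F1 F2) (D2 : deriv_on a b F2 F3)
  (HY : Y_bounded a b F0 F1 F2 F3 K) (Z0 : F0 a = 0).

Lemma Y_bounded_deriv1_zero : F1 a = 0.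
Proof.
  destruct (Req_dec (F1 a) 0) as [|Hne]; [assumption|].
  apply (weighted_bound_zero a b F0 F1 F1 F2 (2 / 3) K); auto; try lra.
  - apply (nonzero_near_simple_zero a b F0 F1); auto.
  - intros y Hy Hy0; exact (proj1 (proj1 (HY y Hy) Hy0)).
Qed.

Lemma Y_bounded_deriv2_zero : F2 a = 0.
Proof.
  destruct (Req_dec (F2 a) 0) as [|Hne]; [assumption|].
  apply (weighted_bound_zero a b F0 F1 F2 F3 (1 / 3) K); auto; try lra.
  - apply (nonzero_near_double_zero a b F0 F1 F2 F3); auto.
    apply Y_bounded_deriv1_zero.
  - intros y Hy Hy0; exact (proj2 (proj1 (HY y Hy) Hy0)).
Qed.

End WeightedBoundsAtZero.

(** * Limits of rescaled families *)

(* Dividing the mean value inequality for [G s] by [s ^ 3] and letting [s -> 0]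
   transfers it to [c]. *)
Section RescaledLimit.

Variables (delta alpha s0 M A : R) (c phi : R -> R) (G Gt : R -> R -> R).
Hypotheses (Halpha : 0 < alpha) (Hs0 : 0 < s0) (HM : 0 <= M) (HA : 0 <= A)
  (DG : forall s, 0 < s <= s0 -> deriv_on 0 delta (G s) (Gt s))
  (HG : forall s t, 0 < s <= s0 -> 0 <= t <= delta ->
     Rabs (G s t - c t * s ^ 3) <= M * s ^ 3 * Rpower s alpha)
  (HGt : forall s t, 0 < s <= s0 -> 0 <= t <= delta ->
     Rabs (Gt s t - phi t * s ^ 3) <= A * s ^ 3 * Rpower s alpha).

Lemma rescaled_increment t y v e :
  0 <= t <= delta -> 0 <= y <= delta -> 0 <= e ->
  (forall u, 0 <= u <= delta -> Rabs (u - t) <= Rabs (y - t) -> Rabs (phi u - v) <= e) ->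
  Rabs (c y - c t - v * (y - t)) <= e * Rabs (y - t).
Proof.
  intros Ht Hy He Hphi; pose proof (Rabs_pos (y - t)) as Hyt.
  apply (le_of_le_add_Rpower alpha s0 _ _ (A * Rabs (y - t) + 2 * M)); auto.
  { apply Rplus_le_le_0_compat; [apply Rmult_le_pos|]; lra. }
  intros s Hs; set (P := Rpower s alpha).
  assert (HP : 0 < P) by apply exp_pos; assert (Hs3 : 0 < s ^ 3) by (apply pow_lt; lra).
  assert (Hh : Rabs ((G s y - v * s ^ 3 * y) - (G s t - v * s ^ 3 * t))
               <= (A * P + e) * s ^ 3 * Rabs (y - t)).
  { apply (deriv_on_mvi_abs 0 delta (fun u => G s u - v * s ^ 3 * u)
      (fun u => Gt s u - v * s ^ 3) t y); auto.
    - apply deriv_on_minus; [auto|].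
      apply deriv_on_is_derive; intros u; auto_derive; auto; ring.
    - intros u Hu Hut.
      replace (Gt s u - v * s ^ 3) with ((Gt s u - phi u * s ^ 3) + (phi u - v) * s ^ 3) by ring.
      eapply Rle_trans; [apply Rabs_triang|]; rewrite Rabs_mult, (Rabs_right (s ^ 3)) by lra.
      assert (Rabs (phi u - v) * s ^ 3 <= e * s ^ 3)
        by (apply Rmult_le_compat_r; [lra | apply Hphi; auto]).
      pose proof (HGt s u Hs Hu) as Hg; fold P in Hg; lra. }
  apply Rmult_le_reg_r with (s ^ 3); [exact Hs3|].
  rewrite <- (Rabs_right (s ^ 3)) at 1 by lra; rewrite <- Rabs_mult.
  replace ((c y - c t - v * (y - t)) * s ^ 3) with
    (((G s y - v * s ^ 3 * y) - (G s t - v * s ^ 3 * t)) - (G s y - c y * s ^ 3)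
     + (G s t - c t * s ^ 3)) by ring.
  eapply Rle_trans; [apply Rabs_triang|].
  eapply Rle_trans; [apply Rplus_le_compat_r, Rabs_triang|]; rewrite Rabs_Ropp.
  pose proof (HG s y Hs Hy) as Hgy; pose proof (HG s t Hs Ht) as Hgt; fold P in Hgy, Hgt.
  lra.
Qed.

Lemma rescaled_lipschitz B :
  (forall u, 0 <= u <= delta -> Rabs (phi u) <= B) ->
  forall t y, 0 <= t <= delta -> 0 <= y <= delta -> Rabs (c y - c t) <= B * Rabs (y - t).
Proof.
  intros HB t y Ht Hy.
  replace (c y - c t) with (c y - c t - 0 * (y - t)) by ring.
  apply rescaled_increment; auto.
  - apply Rle_trans with (Rabs (phi t)); [apply Rabs_pos | apply HB, Ht].
  - intros u Hu _; rewrite Rminus_0_r; apply HB, Hu.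
Qed.

Lemma rescaled_deriv :
  (forall t, 0 <= t <= delta -> forall e, 0 < e -> exists d, 0 < d /\
     forall u, 0 <= u <= delta -> Rabs (u - t) < d -> Rabs (phi u - phi t) <= e) ->
  deriv_on 0 delta c phi.
Proof.
  intros Hphi; apply is_deriv_in_deriv_on; intros t Ht e He.
  destruct (Hphi t Ht e He) as [d [Hd Hb]]; exists d; split; [exact Hd|].
  intros y Hy Hyt; apply rescaled_increment; auto; [lra|].
  intros u Hu Hut; apply Hb; auto; lra.
Qed.

Lemma rescaled_riccati k :
  (forall t, 0 <= t <= delta -> phi t = - k * c t ^ 2) ->
  (forall t, 0 <= t <= delta -> Rabs (c t) <= M) ->
  deriv_on 0 delta c phi.
Proof.
  intros Hphi Hc; set (B := Rabs k * M ^ 2); pose proof (Rabs_pos k) as Hk.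
  assert (HB0 : 0 <= B) by (apply Rmult_le_pos; nra).
  assert (HLip : forall t y, 0 <= t <= delta -> 0 <= y <= delta ->
            Rabs (c y - c t) <= B * Rabs (y - t)).
  { apply rescaled_lipschitz; intros u Hu.
    rewrite Hphi, Rabs_mult, Rabs_Ropp, <- RPow_abs by exact Hu.
    apply Rmult_le_compat_l; [exact Hk|].
    pose proof (Hc u Hu); pose proof (Rabs_pos (c u)); simpl; nra. }
  apply rescaled_deriv; intros t Ht e He.
  set (Q := 2 * Rabs k * M * B + 1).
  assert (HQ : 0 < Q).
  { assert (0 <= Rabs k * M * B) by (repeat apply Rmult_le_pos; lra); unfold Q; lra. }
  exists (e / Q); split; [apply Rdiv_lt_0_compat; lra|]; intros u Hu Hut.
  rewrite !Hphi by assumption.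
  replace (- k * c u ^ 2 - - k * c t ^ 2) with (- k * (c u + c t) * (c u - c t)) by ring.
  rewrite !Rabs_mult, Rabs_Ropp, Rmult_assoc.
  assert (Hsum : Rabs (c u + c t) <= 2 * M).
  { eapply Rle_trans; [apply Rabs_triang|]; pose proof (Hc u Hu); pose proof (Hc t Ht); lra. }
  assert (Hdiff : Rabs (c u - c t) <= B * (e / Q)).
  { eapply Rle_trans; [apply HLip; auto|]; apply Rmult_le_compat_l; lra. }
  apply Rle_trans with (Rabs k * (2 * M * (B * (e / Q)))).
  { apply Rmult_le_compat_l; [exact Hk|].
    apply Rmult_le_compat; auto; apply Rabs_pos. }
  apply Rle_trans with (Q * (e / Q)); [|right; field; lra].
  replace (Rabs k * (2 * M * (B * (e / Q)))) with (2 * Rabs k * M * B * (e / Q)) by ring.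
  apply Rmult_le_compat_r; [apply Rlt_le, Rdiv_lt_0_compat; lra|]; unfold Q; lra.
Qed.

End RescaledLimit.

(** * The Riccati equation *)

Lemma riccati_gronwall_bound k B c : 0 <= B -> Rabs c <= B ->
  Rabs (- k * c ^ 2) <= Rabs k * B * Rabs c.
Proof.
  intros HB Hc; rewrite Rabs_mult, Rabs_Ropp, <- RPow_abs; simpl; rewrite Rmult_1_r.
  rewrite Rmult_assoc; apply Rmult_le_compat_l; [apply Rabs_pos|].
  apply Rmult_le_compat_r; [apply Rabs_pos | exact Hc].
Qed.

Lemma riccati_unique delta k B c1 c2 :
  0 <= delta -> 0 <= B ->
  deriv_on 0 delta c1 (fun t => - k * c1 t ^ 2) ->
  deriv_on 0 delta c2 (fun t => - k * c2 t ^ 2) ->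
  (forall t, 0 <= t <= delta -> Rabs (c1 t) <= B) ->
  (forall t, 0 <= t <= delta -> Rabs (c2 t) <= B) ->
  c1 0 = c2 0 -> forall t, 0 <= t <= delta -> c1 t = c2 t.
Proof.
  intros Hd HB D1 D2 B1 B2 E0 t Ht.
  assert (D : deriv_on 0 delta (fun t => c1 t - c2 t)
                (fun t => - k * c1 t ^ 2 - - k * c2 t ^ 2)).
  { apply deriv_on_minus; auto. }
  enough (c1 t - c2 t = 0) by lra.
  apply (gronwall 0 delta _ _ (Rabs k * (2 * B)) 0 t D); auto; try lra.
  intros u Hu _.
  replace (- k * c1 u ^ 2 - - k * c2 u ^ 2) with (- k * (c1 u + c2 u) * (c1 u - c2 u)) by ring.
  rewrite !Rabs_mult, Rabs_Ropp.
  apply Rmult_le_compat_r; [apply Rabs_pos|]; apply Rmult_le_compat_l; [apply Rabs_pos|].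
  eapply Rle_trans; [apply Rabs_triang|]; pose proof (B1 u Hu); pose proof (B2 u Hu); lra.
Qed.

(* A nonnegative solution of [c' = - k c ^ 2] either vanishes identically or
   stays positive (by uniqueness), and then [c ^ (1/3)] is differentiable. *)
Lemma riccati_cube_root delta k B c :
  0 <= delta -> 0 <= B ->
  deriv_on 0 delta c (fun t => - k * c t ^ 2) ->
  (forall t, 0 <= t <= delta -> 0 <= c t) ->
  (forall t, 0 <= t <= delta -> Rabs (c t) <= B) ->
  exists beta beta' : R -> R, deriv_on 0 delta beta beta' /\
    (forall t, 0 <= t <= delta -> beta' t = - (k / 3) * beta t ^ 4) /\
    (forall t, 0 <= t <= delta -> beta t ^ 3 = c t).
Proof.
  intros Hd HB Dc Hpos Hbd.
  assert (Zc : forall t0 t, 0 <= t0 <= delta -> 0 <= t <= delta -> c t0 = 0 -> c t = 0).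
  { intros t0 t Ht0 Ht; apply (gronwall 0 delta c (fun t => - k * c t ^ 2) (Rabs k * B) t0); auto.
    intros u Hu _; apply riccati_gronwall_bound; auto. }
  destruct (Req_dec (c 0) 0) as [H0|H0].
  - exists (fun _ => 0), (fun _ => 0); split; [|split].
    + apply deriv_on_is_derive; intros x; auto_derive; auto.
    + intros; ring.
    + intros t Ht; rewrite (Zc 0 t ltac:(lra) Ht H0); ring.
  - assert (Hp : forall t, 0 <= t <= delta -> 0 < c t).
    { intros t Ht; destruct (Hpos t Ht) as [|E]; [assumption|].
      exfalso; apply H0, (Zc t 0 Ht ltac:(lra)); auto. }
    exists (fun t => Rpower (c t) (1 / 3)),
      (fun t => 1 / 3 * Rpower (c t) (1 / 3 - 1) * (- k * c t ^ 2)); split; [|split].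
    + apply is_deriv_in_deriv_on; intros x Hx.
      apply (is_deriv_in_comp 0 delta (fun z => Rpower z (1 / 3)) c x (- k * c x ^ 2)).
      * apply (deriv_on_is_deriv_in 0 delta c (fun t => - k * c t ^ 2)); auto.
      * apply is_derive_Reals, derivable_pt_lim_power, Hp, Hx.
    + intros t Ht; specialize (Hp t Ht).
      rewrite <- (Rpower_pow 2 (c t)), <- Rpower_pow, Rpower_mult by (auto; apply exp_pos).
      replace (1 / 3 * Rpower (c t) (1 / 3 - 1) * (- k * Rpower (c t) (INR 2)))
        with (- (k / 3) * (Rpower (c t) (1 / 3 - 1) * Rpower (c t) (INR 2))) by field.
      rewrite <- Rpower_plus; do 2 f_equal; simpl; field.
    + intros t Ht; specialize (Hp t Ht).
      rewrite <- Rpower_pow, Rpower_mult by apply exp_pos.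
      replace (1 / 3 * INR 3) with 1 by (simpl; field); apply Rpower_1, Hp.
Qed.

(** * The nonlinearity *)

Definition nonlin (alpha1 mu1 : R) (m : nat) (u0 u1 u2 u3 : R) : R :=
  u0 * u3 + alpha1 * u1 * u2 + mu1 / INR m * (INR m * u0 ^ (m - 1) * u1).

Lemma nonlin_eq alpha1 mu1 m u0 u1 u2 u3 : (1 <= m)%nat ->
  nonlin alpha1 mu1 m u0 u1 u2 u3 = u0 * u3 + alpha1 * u1 * u2 + mu1 * (u0 ^ (m - 1) * u1).
Proof. intros Hm; assert (0 < INR m) by (apply lt_0_INR; lia); unfold nonlin; field; lra. Qed.

Lemma nonlin_reflect alpha1 mu1 m u0 u1 u2 u3 :
  nonlin alpha1 mu1 m u0 (- u1) u2 (- u3) = - nonlin alpha1 mu1 m u0 u1 u2 u3.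
Proof. unfold nonlin; ring. Qed.

Lemma Rabs_mult_sub_le {x y x0 y0 ex ey X0 Y} :
  Rabs (x - x0) <= ex -> Rabs (y - y0) <= ey -> Rabs x0 <= X0 -> Rabs y <= Y ->
  Rabs (x * y - x0 * y0) <= ex * Y + X0 * ey.
Proof.
  intros Hx Hy HX HY; replace (x * y - x0 * y0) with ((x - x0) * y + x0 * (y - y0)) by ring.
  eapply Rle_trans; [apply Rabs_triang|]; rewrite !Rabs_mult.
  apply Rplus_le_compat; apply Rmult_le_compat; auto; apply Rabs_pos.
Qed.

Lemma Rabs_le_of_sub_le {x x0 X e} : Rabs (x - x0) <= e -> Rabs x0 <= X -> Rabs x <= X + e.
Proof.
  intros H1 H2; replace x with (x0 + (x - x0)) by ring.
  eapply Rle_trans; [apply Rabs_triang | lra].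
Qed.

Lemma Rabs_mult_nonneg_le c M w : Rabs c <= M -> 0 <= w -> Rabs (c * w) <= M * w.
Proof. intros Hc Hw; rewrite Rabs_mult, (Rabs_right w) by lra; apply Rmult_le_compat_r; auto. Qed.

Lemma pow_abs_pred_le (m : nat) x M : (2 <= m)%nat -> Rabs x <= M ->
  Rabs (x ^ (m - 1)) <= Rabs x * M ^ (m - 2).
Proof.
  intros Hm Hx; replace (m - 1)%nat with (S (m - 2)) by lia; simpl.
  rewrite Rabs_mult, <- RPow_abs; apply Rmult_le_compat_l; [apply Rabs_pos|].
  apply pow_incr; split; [apply Rabs_pos | exact Hx].
Qed.

Lemma nonlin_Y_bound alpha1 mu1 m K M F0 F1 F2 F3 :
  (2 <= m)%nat -> F0 <> 0 ->
  Rpower (Rabs F0) (- (2 / 3)) * Rabs F1 <= K -> Rpower (Rabs F0) (- (1 / 3)) * Rabs F2 <= K ->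
  Rabs F3 <= K -> Rabs F0 <= M -> Rabs F1 <= M ->
  Rabs (nonlin alpha1 mu1 m F0 F1 F2 F3)
    <= (K + Rabs alpha1 * K ^ 2 + Rabs mu1 * M ^ (m - 1)) * Rabs F0.
Proof.
  intros Hm Hne Y1 Y2 Y3 B0 B1; rewrite nonlin_eq by lia.
  assert (Hz : 0 < Rabs F0) by (apply Rabs_pos_lt; auto).
  set (P1 := Rpower (Rabs F0) (2 / 3)); set (P2 := Rpower (Rabs F0) (1 / 3)).
  assert (HP1 : 0 < P1) by apply exp_pos; assert (HP2 : 0 < P2) by apply exp_pos.
  assert (HP : P1 * P2 = Rabs F0).
  { unfold P1, P2; rewrite <- Rpower_plus; replace (2 / 3 + 1 / 3) with 1 by field.
    apply Rpower_1; auto. }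
  assert (C1 : Rabs F1 <= K * P1).
  { rewrite Rpower_Ropp in Y1; fold P1 in Y1.
    apply Rmult_le_reg_l with (/ P1); [apply Rinv_0_lt_compat; auto|].
    rewrite <- Rmult_assoc, (Rmult_comm _ K), Rmult_assoc, Rinv_l, Rmult_1_r; lra. }
  assert (C2 : Rabs F2 <= K * P2).
  { rewrite Rpower_Ropp in Y2; fold P2 in Y2.
    apply Rmult_le_reg_l with (/ P2); [apply Rinv_0_lt_compat; auto|].
    rewrite <- Rmult_assoc, (Rmult_comm _ K), Rmult_assoc, Rinv_l, Rmult_1_r; lra. }
  assert (T1 : Rabs (F0 * F3) <= K * Rabs F0).
  { rewrite Rabs_mult, Rmult_comm; apply Rmult_le_compat_r; [apply Rabs_pos | exact Y3]. }
  assert (T2 : Rabs (alpha1 * F1 * F2) <= Rabs alpha1 * K ^ 2 * Rabs F0).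
  { rewrite Rmult_assoc, Rabs_mult, Rmult_assoc, Rabs_mult; apply Rmult_le_compat_l;
      [apply Rabs_pos|].
    apply Rle_trans with (K * P1 * (K * P2)); [apply Rmult_le_compat; auto; apply Rabs_pos|].
    right; rewrite <- HP; ring. }
  assert (T3 : Rabs (mu1 * (F0 ^ (m - 1) * F1)) <= Rabs mu1 * M ^ (m - 1) * Rabs F0).
  { rewrite Rabs_mult, Rmult_assoc; apply Rmult_le_compat_l; [apply Rabs_pos|].
    rewrite Rabs_mult; replace (M ^ (m - 1) * Rabs F0) with (Rabs F0 * M ^ (m - 2) * M)
      by (replace (m - 1)%nat with (S (m - 2)) by lia; simpl; ring).
    apply Rmult_le_compat; auto; try apply Rabs_pos; apply pow_abs_pred_le; auto. }
  eapply Rle_trans; [apply Rabs_triang|].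
  eapply Rle_trans; [apply Rplus_le_compat_r, Rabs_triang|]; lra.
Qed.

Lemma Rabs_pow_pred_mul_le (m : nat) M s P F0 F1 :
  (2 <= m)%nat -> 0 <= M -> 0 < s <= 1 -> s <= P -> Rabs F0 <= M ->
  Rabs F0 <= 2 * M * s ^ 3 -> Rabs F1 <= 4 * M * s ^ 2 ->
  Rabs (F0 ^ (m - 1) * F1) <= 8 * M ^ m * (s ^ 3 * P).
Proof.
  intros Hm HM Hs HP B0 F0s F1s.
  assert (Hsm2 : 0 <= M ^ (m - 2)) by (apply pow_le; lra).
  assert (Hs3 : 0 < s ^ 3) by (apply pow_lt; lra).
  assert (Hs5 : s ^ 5 <= s ^ 3 * P).
  { replace (s ^ 5) with (s ^ 3 * (s * s)) by ring; apply Rmult_le_compat_l; [lra|]; nra. }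
  rewrite Rabs_mult; apply Rle_trans with (2 * M * s ^ 3 * M ^ (m - 2) * (4 * M * s ^ 2)).
  { apply Rmult_le_compat; try apply Rabs_pos; [|exact F1s].
    eapply Rle_trans; [apply (pow_abs_pred_le m F0 M Hm B0)|]; apply Rmult_le_compat_r; auto. }
  assert (Em : M ^ m = M ^ (m - 2) * M ^ 2) by (rewrite <- pow_add; f_equal; lia).
  rewrite Em; replace (2 * M * s ^ 3 * M ^ (m - 2) * (4 * M * s ^ 2))
    with (8 * (M ^ (m - 2) * M ^ 2) * s ^ 5) by ring.
  apply Rmult_le_compat_l; [|exact Hs5].
  assert (0 <= M ^ 2) by (apply pow_le; lra); nra.
Qed.

Lemma nonlin_near_triple_zero alpha1 mu1 m M c s P F0 F1 F2 F3 :
  (2 <= m)%nat -> 0 <= M -> 0 < s <= 1 -> s <= P <= 1 ->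
  Rabs c <= M -> Rabs F0 <= M ->
  Rabs (F0 - c * s ^ 3) <= M * s ^ 3 * P -> Rabs (F1 - 3 * c * s ^ 2) <= M * s ^ 2 * P ->
  Rabs (F2 - 6 * c * s) <= M * s * P -> Rabs (F3 - 6 * c) <= M * P ->
  Rabs (nonlin alpha1 mu1 m F0 F1 F2 F3 - (6 + 18 * alpha1) * c ^ 2 * s ^ 3)
    <= (8 * M ^ 2 + Rabs alpha1 * (10 * M ^ 2) + Rabs mu1 * (8 * M ^ m)) * (s ^ 3 * P).
Proof.
  intros Hm HM Hs HP Hc B0 E0 E1 E2 E3; rewrite nonlin_eq by lia.
  assert (Hs2 : 0 < s ^ 2) by (apply pow_lt; lra).
  assert (Hs3 : 0 < s ^ 3) by (apply pow_lt; lra).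
  assert (Hs3P : s ^ 3 * P <= s ^ 3)
    by (rewrite <- (Rmult_1_r (s ^ 3)) at 2; apply Rmult_le_compat_l; lra).
  assert (A0 : Rabs (c * s ^ 3) <= M * s ^ 3) by (apply Rabs_mult_nonneg_le; lra).
  assert (A1 : Rabs (3 * c * s ^ 2) <= 3 * M * s ^ 2).
  { rewrite (Rmult_comm 3 c), Rmult_assoc, (Rmult_comm 3 M), Rmult_assoc.
    apply Rabs_mult_nonneg_le; lra. }
  assert (A2 : Rabs (6 * c * s) <= 6 * M * s).
  { rewrite (Rmult_comm 6 c), Rmult_assoc, (Rmult_comm 6 M), Rmult_assoc.
    apply Rabs_mult_nonneg_le; lra. }
  assert (A3 : Rabs (6 * c) <= 6 * M)
    by (rewrite Rmult_comm, (Rmult_comm 6); apply Rabs_mult_nonneg_le; lra).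
  assert (HMP : M * P <= M) by nra.
  assert (B3 : Rabs F3 <= 7 * M).
  { eapply Rle_trans; [apply (Rabs_le_of_sub_le E3 A3) | lra]. }
  assert (B2 : Rabs F2 <= 7 * M * s).
  { eapply Rle_trans; [apply (Rabs_le_of_sub_le E2 A2) | nra]. }
  assert (T1 : Rabs (F0 * F3 - c * s ^ 3 * (6 * c)) <= 8 * M ^ 2 * (s ^ 3 * P)).
  { eapply Rle_trans; [apply (Rabs_mult_sub_le E0 E3 A0 B3) | right; ring]. }
  assert (T2 : Rabs (F1 * F2 - 3 * c * s ^ 2 * (6 * c * s)) <= 10 * M ^ 2 * (s ^ 3 * P)).
  { eapply Rle_trans; [apply (Rabs_mult_sub_le E1 E2 A1 B2) | right; ring]. }
  assert (T3 : Rabs (F0 ^ (m - 1) * F1) <= 8 * M ^ m * (s ^ 3 * P)).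
  { apply Rabs_pow_pred_mul_le; auto; try lra.
    - eapply Rle_trans; [apply (Rabs_le_of_sub_le E0 A0) | nra].
    - eapply Rle_trans; [apply (Rabs_le_of_sub_le E1 A1) | nra]. }
  replace (F0 * F3 + alpha1 * F1 * F2 + mu1 * (F0 ^ (m - 1) * F1)
           - (6 + 18 * alpha1) * c ^ 2 * s ^ 3) with
    ((F0 * F3 - c * s ^ 3 * (6 * c)) + alpha1 * (F1 * F2 - 3 * c * s ^ 2 * (6 * c * s))
     + mu1 * (F0 ^ (m - 1) * F1)) by ring.
  eapply Rle_trans; [apply Rabs_triang|].
  eapply Rle_trans; [apply Rplus_le_compat_r, Rabs_triang|]; rewrite !(Rabs_mult alpha1), Rabs_mult.
  pose proof (Rmult_le_compat_l _ _ _ (Rabs_pos alpha1) T2);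
  pose proof (Rmult_le_compat_l _ _ _ (Rabs_pos mu1) T3); lra.
Qed.

Lemma C3a_norm_le_unpack {a b alpha F0 F1 F2 F3 M} :
  a < b -> C3a_norm_le a b alpha F0 F1 F2 F3 M ->
  exists H, 0 <= H <= M /\
    (forall x y, a <= x <= b -> a <= y <= b -> x <> y ->
       Rabs (F3 x - F3 y) <= H * Rpower (Rabs (x - y)) alpha) /\
    (forall x, a <= x <= b ->
       Rabs (F0 x) <= M /\ Rabs (F1 x) <= M /\ Rabs (F2 x) <= M /\ Rabs (F3 x) <= M).
Proof.
  intros Hab [M0 [M1 [M2 [M3 [H [B0 [B1 [B2 [B3 [BH Hsum]]]]]]]]]].
  assert (Ha : a <= a <= b) by lra.
  pose proof (Rle_trans _ _ _ (Rabs_pos _) (B0 a Ha));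
  pose proof (Rle_trans _ _ _ (Rabs_pos _) (B1 a Ha));
  pose proof (Rle_trans _ _ _ (Rabs_pos _) (B2 a Ha));
  pose proof (Rle_trans _ _ _ (Rabs_pos _) (B3 a Ha)).
  assert (HH : 0 <= H).
  { assert (HP : 0 < Rpower (Rabs (a - b)) alpha) by apply exp_pos.
    pose proof (Rle_trans _ _ _ (Rabs_pos _) (BH a b Ha ltac:(lra) ltac:(lra))).
    destruct (Rle_dec 0 H) as [|Hneg]; [assumption|].
    assert (H * Rpower (Rabs (a - b)) alpha < 0) by (apply Rmult_neg_pos; lra); lra. }
  exists H; split; [lra|]; split; [exact BH|].
  intros x Hx; pose proof (B0 x Hx); pose proof (B1 x Hx); pose proof (B2 x Hx);
  pose proof (B3 x Hx); lra.
Qed.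

Lemma C3a_norm_le_nonneg {a b alpha F0 F1 F2 F3 M} :
  a < b -> C3a_norm_le a b alpha F0 F1 F2 F3 M -> 0 <= M.
Proof. intros Hab HC; destruct (C3a_norm_le_unpack Hab HC) as [H [HH _]]; lra. Qed.

Lemma x_derivs_reflect a b F0 F1 F2 F3 :
  x_derivs a b F0 F1 F2 F3 ->
  x_derivs a b (fun x => F0 (a + b - x)) (fun x => - F1 (a + b - x))
    (fun x => F2 (a + b - x)) (fun x => - F3 (a + b - x)).
Proof.
  intros [D0 [D1 D2]]; split; [|split]; try apply deriv_on_reflect; auto.
  apply (deriv_on_ext _ _ _ _ _ (deriv_on_opp _ _ _ _ (deriv_on_reflect _ _ _ _ D1))).
  intros; ring.
Qed.

Lemma C3a_norm_le_reflect a b alpha F0 F1 F2 F3 M :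
  C3a_norm_le a b alpha F0 F1 F2 F3 M ->
  C3a_norm_le a b alpha (fun x => F0 (a + b - x)) (fun x => - F1 (a + b - x))
    (fun x => F2 (a + b - x)) (fun x => - F3 (a + b - x)) M.
Proof.
  intros [M0 [M1 [M2 [M3 [H [B0 [B1 [B2 [B3 [BH Hsum]]]]]]]]]].
  exists M0, M1, M2, M3, H; split; [|split; [|split; [|split; [|split]]]].
  - intros x Hx; apply B0; lra.
  - intros x Hx; rewrite Rabs_Ropp; apply B1; lra.
  - intros x Hx; apply B2; lra.
  - intros x Hx; rewrite Rabs_Ropp; apply B3; lra.
  - intros x y Hx Hy Hne.
    replace (- F3 (a + b - x) - - F3 (a + b - y))
      with (- (F3 (a + b - x) - F3 (a + b - y))) by ring.
    replace (x - y) with (- ((a + b - x) - (a + b - y))) by ring.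
    rewrite !Rabs_Ropp; apply BH; lra.
  - exact Hsum.
Qed.

Lemma Y_bounded_reflect a b F0 F1 F2 F3 K :
  Y_bounded a b F0 F1 F2 F3 K ->
  Y_bounded a b (fun x => F0 (a + b - x)) (fun x => - F1 (a + b - x))
    (fun x => F2 (a + b - x)) (fun x => - F3 (a + b - x)) K.
Proof. intros HY x Hx; rewrite !Rabs_Ropp; apply HY; lra. Qed.

(** * Solutions near the left endpoint *)

Definition is_signed_solution (sg alpha1 mu1 : R) (m : nat) (a b delta : R)
    (f f1 f2 f3 ft : R -> R -> R) : Prop :=
  forall x, a <= x <= b ->
    deriv_on 0 delta (fun t => f t x) (fun t => ft t x) /\
    forall t, 0 <= t <= delta ->
      ft t x + sg * nonlin alpha1 mu1 m (f t x) (f1 t x) (f2 t x) (f3 t x) = 0.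

Section LeftEndpoint.

Variables (sg alpha1 mu1 : R) (m : nat) (a b delta alpha M K : R)
  (f f1 f2 f3 ft : R -> R -> R).
Hypotheses (Hm : (2 <= m)%nat) (Hab : a < b) (Hdelta : 0 < delta) (Halpha : 0 < alpha <= 1)
  (HX : forall t, 0 <= t <= delta -> x_derivs a b (f t) (f1 t) (f2 t) (f3 t))
  (HM : forall t, 0 <= t <= delta -> C3a_norm_le a b alpha (f t) (f1 t) (f2 t) (f3 t) M)
  (HK : forall t, 0 <= t <= delta -> Y_bounded a b (f t) (f1 t) (f2 t) (f3 t) K)
  (HE : is_signed_solution sg alpha1 mu1 m a b delta f f1 f2 f3 ft)
  (Hpos : forall x, a < x < b -> 0 < f 0 x).

Lemma solution_bounds t x : 0 <= t <= delta -> a <= x <= b ->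
  Rabs (f t x) <= M /\ Rabs (f1 t x) <= M /\ Rabs (f2 t x) <= M /\ Rabs (f3 t x) <= M.
Proof.
  intros Ht Hx; destruct (C3a_norm_le_unpack Hab (HM t Ht)) as [H [_ [_ HB]]].
  exact (HB x Hx).
Qed.

Lemma solution_bound_nonneg : 0 <= M.
Proof. exact (C3a_norm_le_nonneg Hab (HM 0 ltac:(lra))). Qed.

Lemma time_deriv_eq t x : 0 <= t <= delta -> a <= x <= b ->
  ft t x = - sg * nonlin alpha1 mu1 m (f t x) (f1 t x) (f2 t x) (f3 t x).
Proof. intros Ht Hx; pose proof (proj2 (HE x Hx) t Ht); lra. Qed.

Lemma zero_persists x t0 t : a <= x <= b -> 0 <= t0 <= delta -> 0 <= t <= delta ->
  f t0 x = 0 -> f t x = 0.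
Proof.
  intros Hx; apply (gronwall 0 delta (fun t => f t x) (fun t => ft t x)
    (Rabs sg * (K + Rabs alpha1 * K ^ 2 + Rabs mu1 * M ^ (m - 1))) _ _ (proj1 (HE x Hx))).
  intros u Hu Hne; rewrite time_deriv_eq, Rabs_mult, Rabs_Ropp, Rmult_assoc by auto.
  apply Rmult_le_compat_l; [apply Rabs_pos|].
  destruct (HK u Hu x Hx) as [HY [_ Y3]]; destruct (HY Hne) as [Y1 Y2].
  destruct (solution_bounds u x Hu Hx) as [B0 [B1 _]].
  apply nonlin_Y_bound; auto.
Qed.

Lemma positive_persists x t : a < x < b -> 0 <= t <= delta -> 0 < f t x.
Proof.
  intros Hx Ht.
  assert (Hnz : forall u, 0 <= u <= delta -> f u x <> 0).
  { intros u Hu E; pose proof (zero_persists x u 0 ltac:(lra) Hu ltac:(lra) E).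
    pose proof (Hpos x Hx); lra. }
  destruct (Rlt_le_dec 0 (f t x)) as [|[Hlt|E]]; [assumption| |exfalso; exact (Hnz t Ht E)].
  exfalso; set (h s := f (clamp 0 delta s) x).
  assert (Hc : continuity h)
    by exact (deriv_on_continuous_clamp 0 delta (fun u => f u x) (fun u => ft u x)
                ltac:(lra) (proj1 (HE x ltac:(lra)))).
  destruct (IVT_gen h 0 t 0 Hc) as [s [_ Hs]].
  { unfold h; rewrite !clamp_id by lra; pose proof (Hpos x Hx).
    unfold Rmin, Rmax; destruct Rle_dec; lra. }
  apply (Hnz (clamp 0 delta s)); [apply clamp_in; lra | exact Hs].
Qed.

Hypothesis (Z0 : f 0 a = 0).

Lemma left_zero t : 0 <= t <= delta -> f t a = 0 /\ f1 t a = 0 /\ f2 t a = 0.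
Proof.
  intros Ht; assert (Z : f t a = 0) by (apply (zero_persists a 0); auto; lra).
  destruct (HX t Ht) as [D0 [D1 D2]].
  split; [exact Z | split].
  - exact (Y_bounded_deriv1_zero a b K _ _ _ _ Hab D0 D1 (HK t Ht) Z).
  - exact (Y_bounded_deriv2_zero a b K _ _ _ _ Hab D0 D1 D2 (HK t Ht) Z).
Qed.

Lemma left_taylor t M' x :
  0 <= t <= delta -> C3a_norm_le a b alpha (f t) (f1 t) (f2 t) (f3 t) M' -> a < x <= b ->
  Rabs (f t x - f3 t a / 6 * (x - a) ^ 3) <= M' * (x - a) ^ 3 * Rpower (x - a) alpha /\
  Rabs (f1 t x - 3 * (f3 t a / 6) * (x - a) ^ 2) <= M' * (x - a) ^ 2 * Rpower (x - a) alpha /\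
  Rabs (f2 t x - 6 * (f3 t a / 6) * (x - a)) <= M' * (x - a) * Rpower (x - a) alpha /\
  Rabs (f3 t x - 6 * (f3 t a / 6)) <= M' * Rpower (x - a) alpha.
Proof.
  intros Ht HC Hx.
  destruct (C3a_norm_le_unpack Hab HC) as [H [HH [Hol _]]].
  destruct (HX t Ht) as [D0 [D1 D2]]; destruct (left_zero t Ht) as [Z0' [Z1 Z2]].
  assert (HP : 0 < Rpower (x - a) alpha) by apply exp_pos.
  assert (Hw : forall k, 0 <= (x - a) ^ k * Rpower (x - a) alpha)
    by (intros k; apply Rmult_le_pos; [apply pow_le; lra | lra]).
  assert (Mono : forall k E, E <= H * (x - a) ^ k * Rpower (x - a) alpha ->
             E <= M' * (x - a) ^ k * Rpower (x - a) alpha).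
  { intros k E HE'; rewrite !Rmult_assoc in *; eapply Rle_trans; [exact HE'|].
    apply Rmult_le_compat_r; [apply Hw | lra]. }
  replace (3 * (f3 t a / 6)) with (f3 t a / 2) by field.
  replace (6 * (f3 t a / 6)) with (f3 t a) by field.
  split; [|split; [|split]].
  - apply Mono, (holder_taylor0 a b alpha H (f t) (f1 t) (f2 t) (f3 t)); auto; lra.
  - apply Mono, (holder_taylor1 a b alpha H (f1 t) (f2 t) (f3 t)); auto; lra.
  - rewrite <- (pow_1 (x - a)) at 2; apply Mono; rewrite pow_1.
    apply (holder_taylor2 a b alpha H (f2 t) (f3 t)); auto; lra.
  - replace (M' * Rpower (x - a) alpha) with (M' * (x - a) ^ 0 * Rpower (x - a) alpha) by ring.
    apply Mono; rewrite pow_O, Rmult_1_r.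
    apply (holder_taylor3 a b alpha H (f3 t)); auto; lra.
Qed.

Lemma left_coeff_bound t : 0 <= t <= delta -> Rabs (f3 t a / 6) <= M.
Proof.
  intros Ht; destruct (solution_bounds t a Ht ltac:(lra)) as [_ [_ [_ B3]]].
  pose proof solution_bound_nonneg.
  unfold Rdiv; rewrite Rabs_mult, (Rabs_right (/ 6)) by lra; lra.
Qed.

Lemma left_coeff_nonneg t : 0 <= t <= delta -> 0 <= f3 t a / 6.
Proof.
  intros Ht; cut (- (f3 t a / 6) <= 0); [lra|].
  apply (le_of_le_add_Rpower alpha ((b - a) / 2) _ 0 M);
    [lra | lra | apply solution_bound_nonneg|].
  intros s Hs; destruct (left_taylor t M (a + s) Ht (HM t Ht) ltac:(lra)) as [T0 _].
  replace (a + s - a) with s in T0 by ring.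
  pose proof (positive_persists (a + s) t ltac:(lra) Ht).
  assert (Hs3 : 0 < s ^ 3) by (apply pow_lt; lra).
  pose proof (Rle_trans _ _ _ (Rle_abs _) T0).
  assert (0 < (f3 t a / 6 + M * Rpower s alpha) * s ^ 3) by lra.
  assert (0 < f3 t a / 6 + M * Rpower s alpha) by (apply (Rmult_lt_reg_r (s ^ 3)); lra).
  lra.
Qed.

Lemma left_time_deriv_expansion t s :
  0 <= t <= delta -> 0 < s <= 1 -> a + s <= b ->
  Rabs (ft t (a + s) + sg * (6 + 18 * alpha1) * (f3 t a / 6) ^ 2 * s ^ 3)
    <= Rabs sg * (8 * M ^ 2 + Rabs alpha1 * (10 * M ^ 2) + Rabs mu1 * (8 * M ^ m))
       * (s ^ 3 * Rpower s alpha).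
Proof.
  intros Ht Hs Hsb.
  destruct (left_taylor t M (a + s) Ht (HM t Ht) ltac:(lra)) as [T0 [T1 [T2 T3]]].
  replace (a + s - a) with s in T0, T1, T2, T3 by ring.
  rewrite time_deriv_eq by lra.
  set (N := nonlin alpha1 mu1 m (f t (a + s)) (f1 t (a + s)) (f2 t (a + s)) (f3 t (a + s))).
  replace (- sg * N + sg * (6 + 18 * alpha1) * (f3 t a / 6) ^ 2 * s ^ 3)
    with (- sg * (N - (6 + 18 * alpha1) * (f3 t a / 6) ^ 2 * s ^ 3)) by ring.
  rewrite Rabs_mult, Rabs_Ropp, (Rmult_assoc (Rabs sg)).
  apply Rmult_le_compat_l; [apply Rabs_pos|].
  apply nonlin_near_triple_zero; auto using solution_bound_nonneg, left_coeff_bound; try lra.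
  - apply Rpower_small_bounds; lra.
  - apply (solution_bounds t (a + s)); lra.
Qed.

Lemma left_coeff_riccati :
  deriv_on 0 delta (fun t => f3 t a / 6)
    (fun t => - (sg * (6 + 18 * alpha1)) * (f3 t a / 6) ^ 2).
Proof.
  pose proof solution_bound_nonneg as HM0.
  set (A := 8 * M ^ 2 + Rabs alpha1 * (10 * M ^ 2) + Rabs mu1 * (8 * M ^ m)).
  assert (HA : 0 <= A).
  { assert (0 <= M ^ 2) by (apply pow_le; lra); assert (0 <= M ^ m) by (apply pow_le; lra).
    pose proof (Rabs_pos alpha1); pose proof (Rabs_pos mu1); unfold A; nra. }
  set (s0 := Rmin 1 (b - a)).
  assert (Hs0 : forall s, 0 < s <= s0 -> s <= 1 /\ a + s <= b).
  { intros s Hs; pose proof (Rmin_l 1 (b - a)); pose proof (Rmin_r 1 (b - a)).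
    unfold s0 in *; lra. }
  apply (rescaled_riccati delta alpha s0 M (Rabs sg * A) _ _
    (fun s t => f t (a + s)) (fun s t => ft t (a + s))) with (k := sg * (6 + 18 * alpha1));
    try lra; auto using left_coeff_bound.
  - apply Rmin_pos; lra.
  - apply Rmult_le_pos; [apply Rabs_pos | exact HA].
  - intros s Hs; apply HE; pose proof (Hs0 s Hs); lra.
  - intros s t Hs Ht; pose proof (Hs0 s Hs).
    destruct (left_taylor t M (a + s) Ht (HM t Ht) ltac:(lra)) as [T0 _].
    replace (a + s - a) with s in T0 by ring; exact T0.
  - intros s t Hs Ht; destruct (Hs0 s Hs) as [Hs1 Hsb].
    replace (ft t (a + s) - - (sg * (6 + 18 * alpha1)) * (f3 t a / 6) ^ 2 * s ^ 3)
      with (ft t (a + s) + sg * (6 + 18 * alpha1) * (f3 t a / 6) ^ 2 * s ^ 3) by ring.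
    replace (Rabs sg * A * s ^ 3 * Rpower s alpha)
      with (Rabs sg * A * (s ^ 3 * Rpower s alpha)) by ring.
    apply left_time_deriv_expansion; lra.
Qed.

End LeftEndpoint.

Definition signed_Sol (sg alpha1 mu1 : R) (m : nat) (a b delta alpha : R)
    (f f1 f2 f3 ft : R -> R -> R) : Prop :=
  in_Linf_Ctilde3a a b delta alpha f f1 f2 f3 /\
  is_signed_solution sg alpha1 mu1 m a b delta f f1 f2 f3 ft /\
  (forall x, a < x < b -> 0 < f 0 x) /\ f 0 a = 0 /\ f 0 b = 0.

Lemma Sol_signed_Sol {alpha1 mu1 m a b delta alpha f f1 f2 f3 ft} :
  Sol alpha1 mu1 m a b delta alpha f f1 f2 f3 ft ->
  signed_Sol 1 alpha1 mu1 m a b delta alpha f f1 f2 f3 ft.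
Proof.
  intros [HL [HE [Hpos [Za [_ [_ [Zb _]]]]]]]; split; [exact HL|]; split; [|auto].
  intros x Hx; destruct (HE x Hx) as [Dt Eq]; split; [exact Dt|].
  intros t Ht; rewrite <- (Eq t Ht); unfold nonlin; ring.
Qed.

Lemma signed_Sol_reflect {sg alpha1 mu1 m a b delta alpha f f1 f2 f3 ft} :
  signed_Sol sg alpha1 mu1 m a b delta alpha f f1 f2 f3 ft ->
  signed_Sol (- sg) alpha1 mu1 m a b delta alpha
    (fun t x => f t (a + b - x)) (fun t x => - f1 t (a + b - x))
    (fun t x => f2 t (a + b - x)) (fun t x => - f3 t (a + b - x))
    (fun t x => ft t (a + b - x)).
Proof.
  intros [[HX [[M HM] [K HK]]] [HE [Hpos [Za Zb]]]].
  split; [|split; [|split; [|split]]].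
  - split; [|split].
    + intros t Ht; apply x_derivs_reflect, HX, Ht.
    + exists M; intros t Ht; apply C3a_norm_le_reflect, HM, Ht.
    + exists K; intros t Ht; apply Y_bounded_reflect, HK, Ht.
  - intros x Hx; destruct (HE (a + b - x) ltac:(lra)) as [Dt Eq]; split; [exact Dt|].
    intros t Ht; rewrite nonlin_reflect, <- (Eq t Ht); ring.
  - intros x Hx; apply Hpos; lra.
  - replace (a + b - a) with b by ring; exact Zb.
  - replace (a + b - b) with a by ring; exact Za.
Qed.

Section SignedSolution.

Variables (sg alpha1 mu1 : R) (m : nat) (a b delta alpha : R).
Hypotheses (Hm : (2 <= m)%nat) (Hab : a < b) (Hdelta : 0 < delta) (Halpha : 0 < alpha <= 1).

Lemma signed_Sol_boundary f f1 f2 f3 ft :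
  signed_Sol sg alpha1 mu1 m a b delta alpha f f1 f2 f3 ft ->
  forall t, 0 <= t <= delta ->
    f t a = 0 /\ f t b = 0 /\ (forall x, a < x < b -> 0 < f t x).
Proof.
  intros [[HX [[M HM] [K HK]]] [HE [Hpos [Za Zb]]]] t Ht.
  split; [|split].
  - eapply zero_persists with (a := a) (b := b) (t0 := 0); eauto; lra.
  - eapply zero_persists with (a := a) (b := b) (t0 := 0); eauto; lra.
  - intros x Hx; eapply positive_persists with (a := a) (b := b); eauto.
Qed.

Lemma signed_Sol_left_expansion {f f1 f2 f3 ft} :
  signed_Sol sg alpha1 mu1 m a b delta alpha f f1 f2 f3 ft ->
  exists beta beta' : R -> R,
    deriv_on 0 delta beta beta' /\
    (forall t, 0 <= t <= delta -> beta' t = - (sg * (2 + 6 * alpha1)) * beta t ^ 4) /\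
    6 * beta 0 ^ 3 = f3 0 a /\
    forall M', (forall t, 0 <= t <= delta ->
                  C3a_norm_le a b alpha (f t) (f1 t) (f2 t) (f3 t) M') ->
    forall t x, 0 <= t <= delta -> a < x <= b ->
      Rabs (f t x - (beta t * (x - a)) ^ 3) <= M' * Rpower (x - a) (3 + alpha).
Proof.
  intros [[HX [[M HM] [K HK]]] [HE [Hpos [Za _]]]].
  destruct (riccati_cube_root delta (sg * (6 + 18 * alpha1)) M (fun t => f3 t a / 6))
    as [beta [beta' [D [Ebeta' Ebeta]]]]; try lra.
  - eapply solution_bound_nonneg with (a := a) (b := b); eauto.
  - eapply left_coeff_riccati with (a := a) (b := b); eauto.
  - eapply left_coeff_nonneg with (a := a) (b := b); eauto.
  - eapply left_coeff_bound with (a := a) (b := b); eauto.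
  - exists beta, beta'; split; [exact D|]; split; [|split].
    + intros t Ht; rewrite Ebeta' by exact Ht; field.
    + rewrite Ebeta by lra; field.
    + intros M' HM' t x Ht Hx.
      edestruct left_taylor with (a := a) (b := b) (x := x) (M' := M') as [T0 _]; eauto.
      rewrite Rpow_mult_distr, Ebeta, Rpower_3_plus by (exact Ht || lra).
      rewrite <- Rmult_assoc; exact T0.
Qed.

Lemma signed_Sol_left_determined {f f1 f2 f3 ft g g1 g2 g3 gt} :
  signed_Sol sg alpha1 mu1 m a b delta alpha f f1 f2 f3 ft ->
  signed_Sol sg alpha1 mu1 m a b delta alpha g g1 g2 g3 gt ->
  f3 0 a = g3 0 a ->
  forall t, 0 <= t <= delta ->
    f t a = g t a /\ f1 t a = g1 t a /\ f2 t a = g2 t a /\ f3 t a = g3 t a.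
Proof.
  intros [[HXf [[Mf HMf] [Kf HKf]]] [HEf [Hposf [Zf _]]]]
         [[HXg [[Mg HMg] [Kg HKg]]] [HEg [Hposg [Zg _]]]] E3 t Ht.
  edestruct left_zero with (a := a) (b := b) (f := f) as [F0 [F1 F2]]; eauto.
  edestruct left_zero with (a := a) (b := b) (f := g) as [G0 [G1 G2]]; eauto.
  assert (Hf0 : 0 <= Mf) by (eapply solution_bound_nonneg with (a := a) (b := b); eauto).
  assert (HB : Mf <= Rmax Mf Mg /\ Mg <= Rmax Mf Mg) by (split; [apply Rmax_l | apply Rmax_r]).
  assert (E : f3 t a / 6 = g3 t a / 6).
  { apply (riccati_unique delta (sg * (6 + 18 * alpha1)) (Rmax Mf Mg)
      (fun t => f3 t a / 6) (fun t => g3 t a / 6)); auto; try lra.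
    - eapply left_coeff_riccati with (a := a) (b := b); eauto.
    - eapply left_coeff_riccati with (a := a) (b := b); eauto.
    - intros u Hu; eapply Rle_trans;
        [eapply left_coeff_bound with (a := a) (b := b) | ]; eauto; lra.
    - intros u Hu; eapply Rle_trans;
        [eapply left_coeff_bound with (a := a) (b := b) | ]; eauto; lra. }
  repeat split; lra.
Qed.

End SignedSolution.

Lemma Sol_expansion_left C alpha1 mu1 m a b delta alpha f f1 f2 f3 ft :
  1 <= C -> (2 <= m)%nat -> a < b -> 0 < delta -> 0 < alpha <= 1 ->
  Sol alpha1 mu1 m a b delta alpha f f1 f2 f3 ft ->
  exists beta beta' : R -> R,
    deriv_on 0 delta beta beta' /\
    (forall t, 0 <= t <= delta -> beta' t = - (2 + 6 * alpha1) * beta t ^ 4) /\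
    6 * beta 0 ^ 3 = f3 0 a /\
    forall M, (forall t, 0 <= t <= delta ->
                 C3a_norm_le a b alpha (f t) (f1 t) (f2 t) (f3 t) M) ->
    forall t, 0 <= t <= delta ->
    exists eta, 0 < eta /\
      forall x, a < x < a + eta -> x <= b ->
        Rabs (f t x - (beta t * (x - a)) ^ 3) <= C * M * Rpower (x - a) (3 + alpha).
Proof.
  intros HC Hm Hab Hd Hal HS.
  destruct (signed_Sol_left_expansion 1 alpha1 mu1 m a b delta alpha Hm Hab Hd Hal
    (Sol_signed_Sol HS)) as [beta [beta' [D [E1 [E2 Hexp]]]]].
  exists beta, beta'; split; [exact D|]; split; [|split; [exact E2|]].
  { intros t Ht; rewrite E1 by exact Ht; ring. }
  intros M HM t Ht; exists (b - a); split; [lra|]; intros x Hx Hxb.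
  eapply Rle_trans; [apply Hexp; auto; lra|].
  apply Rmult_le_compat_r; [left; apply exp_pos|].
  pose proof (C3a_norm_le_nonneg Hab (HM t Ht)); nra.
Qed.

Lemma Sol_expansion_right C alpha1 mu1 m a b delta alpha f f1 f2 f3 ft :
  1 <= C -> (2 <= m)%nat -> a < b -> 0 < delta -> 0 < alpha <= 1 ->
  Sol alpha1 mu1 m a b delta alpha f f1 f2 f3 ft ->
  exists beta beta' : R -> R,
    deriv_on 0 delta beta beta' /\
    (forall t, 0 <= t <= delta -> beta' t = (2 + 6 * alpha1) * beta t ^ 4) /\
    6 * beta 0 ^ 3 = - f3 0 b /\
    forall M, (forall t, 0 <= t <= delta ->
                 C3a_norm_le a b alpha (f t) (f1 t) (f2 t) (f3 t) M) ->
    forall t, 0 <= t <= delta ->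
    exists eta, 0 < eta /\
      forall x, b - eta < x < b -> a <= x ->
        Rabs (f t x - (beta t * (b - x)) ^ 3) <= C * M * Rpower (b - x) (3 + alpha).
Proof.
  intros HC Hm Hab Hd Hal HS.
  destruct (signed_Sol_left_expansion (- 1) alpha1 mu1 m a b delta alpha Hm Hab Hd Hal
    (signed_Sol_reflect (Sol_signed_Sol HS))) as [beta [beta' [D [E1 [E2 Hexp]]]]].
  exists beta, beta'; split; [exact D|]; split; [|split].
  - intros t Ht; rewrite E1 by exact Ht; ring.
  - rewrite E2; do 2 f_equal; ring.
  - intros M HM t Ht; exists (b - a); split; [lra|]; intros x Hx Hxa.
    assert (HMr : forall t, 0 <= t <= delta -> C3a_norm_le a b alpha
      (fun x => f t (a + b - x)) (fun x => - f1 t (a + b - x))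
      (fun x => f2 t (a + b - x)) (fun x => - f3 t (a + b - x)) M)
      by (intros u Hu; apply C3a_norm_le_reflect, HM, Hu).
    specialize (Hexp M HMr t (a + b - x) Ht ltac:(lra)).
    replace (a + b - (a + b - x)) with x in Hexp by ring.
    replace (a + b - x - a) with (b - x) in Hexp by ring.
    eapply Rle_trans; [exact Hexp|].
    apply Rmult_le_compat_r; [left; apply exp_pos|].
    pose proof (C3a_norm_le_nonneg Hab (HM t Ht)); nra.
Qed.

Lemma Sol_determined_left alpha1 mu1 m a b delta alpha f f1 f2 f3 ft g g1 g2 g3 gt :
  (2 <= m)%nat -> a < b -> 0 < delta -> 0 < alpha <= 1 ->
  Sol alpha1 mu1 m a b delta alpha f f1 f2 f3 ft ->
  Sol alpha1 mu1 m a b delta alpha g g1 g2 g3 gt ->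
  f 0 a = g 0 a /\ f1 0 a = g1 0 a /\ f2 0 a = g2 0 a /\ f3 0 a = g3 0 a ->
  forall t, 0 <= t <= delta ->
    f t a = g t a /\ f1 t a = g1 t a /\ f2 t a = g2 t a /\ f3 t a = g3 t a.
Proof.
  intros Hm Hab Hd Hal Hf Hg [_ [_ [_ E3]]].
  exact (signed_Sol_left_determined 1 alpha1 mu1 m a b delta alpha Hm Hab Hd Hal
    (Sol_signed_Sol Hf) (Sol_signed_Sol Hg) E3).
Qed.

Lemma Sol_determined_right alpha1 mu1 m a b delta alpha f f1 f2 f3 ft g g1 g2 g3 gt :
  (2 <= m)%nat -> a < b -> 0 < delta -> 0 < alpha <= 1 ->
  Sol alpha1 mu1 m a b delta alpha f f1 f2 f3 ft ->
  Sol alpha1 mu1 m a b delta alpha g g1 g2 g3 gt ->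
  f 0 b = g 0 b /\ f1 0 b = g1 0 b /\ f2 0 b = g2 0 b /\ f3 0 b = g3 0 b ->
  forall t, 0 <= t <= delta ->
    f t b = g t b /\ f1 t b = g1 t b /\ f2 t b = g2 t b /\ f3 t b = g3 t b.
Proof.
  intros Hm Hab Hd Hal Hf Hg [_ [_ [_ E3]]] t Ht.
  assert (Hb : a + b - a = b) by ring.
  destruct (signed_Sol_left_determined (- 1) alpha1 mu1 m a b delta alpha Hm Hab Hd Hal
    (signed_Sol_reflect (Sol_signed_Sol Hf)) (signed_Sol_reflect (Sol_signed_Sol Hg))
    ltac:(cbv beta; rewrite Hb, E3; reflexivity) t Ht) as [E0' [E1' [E2' E3']]].
  cbv beta in *; rewrite Hb in E0', E1', E2', E3'; repeat split; lra.
Qed.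

Theorem lemma3p1 :
  exists C : R, 0 < C /\
  forall (alpha1 mu1 : R) (m : nat) (a b delta alpha : R),
    (2 <= m)%nat -> a < b -> 0 < delta -> 0 < alpha <= 1 ->
    (forall f f1 f2 f3 ft : R -> R -> R,
       Sol alpha1 mu1 m a b delta alpha f f1 f2 f3 ft ->
       (* (1) vanishing at the boundary, positivity inside *)
       (forall t, 0 <= t <= delta ->
          f t a = 0 /\ f t b = 0 /\ (forall x, a < x < b -> 0 < f t x)) /\
       (* expansion at a *)
       (exists beta beta' : R -> R,
          deriv_on 0 delta beta beta' /\
          (forall t, 0 <= t <= delta ->
             beta' t = - (2 + 6 * alpha1) * beta t ^ 4) /\
          6 * beta 0 ^ 3 = f3 0 a /\
          forall M, (forall t, 0 <= t <= delta ->
                       C3a_norm_le a b alpha (f t) (f1 t) (f2 t) (f3 t) M) ->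
          forall t, 0 <= t <= delta ->
          exists eta, 0 < eta /\
            forall x, a < x < a + eta -> x <= b ->
              Rabs (f t x - (beta t * (x - a)) ^ 3)
                <= C * M * Rpower (x - a) (3 + alpha)) /\
       (* analogous expansion at b *)
       (exists beta beta' : R -> R,
          deriv_on 0 delta beta beta' /\
          (forall t, 0 <= t <= delta ->
             beta' t = (2 + 6 * alpha1) * beta t ^ 4) /\
          6 * beta 0 ^ 3 = - f3 0 b /\
          forall M, (forall t, 0 <= t <= delta ->
                       C3a_norm_le a b alpha (f t) (f1 t) (f2 t) (f3 t) M) ->
          forall t, 0 <= t <= delta ->
          exists eta, 0 < eta /\
            forall x, b - eta < x < b -> a <= x ->
              Rabs (f t x - (beta t * (b - x)) ^ 3)
                <= C * M * Rpower (b - x) (3 + alpha))) /\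
    (* (2) boundary derivatives determined by their initial values *)
    (forall f f1 f2 f3 ft g g1 g2 g3 gt : R -> R -> R,
       Sol alpha1 mu1 m a b delta alpha f f1 f2 f3 ft ->
       Sol alpha1 mu1 m a b delta alpha g g1 g2 g3 gt ->
       (f 0 a = g 0 a /\ f1 0 a = g1 0 a /\ f2 0 a = g2 0 a /\ f3 0 a = g3 0 a ->
        forall t, 0 <= t <= delta ->
          f t a = g t a /\ f1 t a = g1 t a /\ f2 t a = g2 t a /\ f3 t a = g3 t a) /\
       (f 0 b = g 0 b /\ f1 0 b = g1 0 b /\ f2 0 b = g2 0 b /\ f3 0 b = g3 0 b ->
        forall t, 0 <= t <= delta ->
          f t b = g t b /\ f1 t b = g1 t b /\ f2 t b = g2 t b /\ f3 t b = g3 t b)).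
Proof.
  exists 1; split; [lra|].
  intros alpha1 mu1 m a b delta alpha Hm Hab Hd Hal; split.
  - intros f f1 f2 f3 ft HS; split; [|split].
    + eapply signed_Sol_boundary; eauto using Sol_signed_Sol.
    + apply Sol_expansion_left with (mu1 := mu1) (m := m) (ft := ft); auto; lra.
    + apply Sol_expansion_right with (mu1 := mu1) (m := m) (ft := ft); auto; lra.
  - intros f f1 f2 f3 ft g g1 g2 g3 gt Hf Hg; split.
    + apply (Sol_determined_left alpha1 mu1 m a b delta alpha f f1 f2 f3 ft g g1 g2 g3 gt); auto.
    + apply (Sol_determined_right alpha1 mu1 m a b delta alpha f f1 f2 f3 ft g g1 g2 g3 gt); auto.
Qed.
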